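(* Let $\mathcal{H}\subset X$ be either a horoball or a $k$-horoball for some integer $k\ge1$, and let $\tau_1,\tau_2$ be regular geodesic segments in $X$ whose endpoints $a_1,b_1$ and $a_2,b_2$ satisfy $d_X(a_1,a_2)\le L$ and $d_X(b_1,b_2)\le L$. If $\tau_1\cap\mathcal{H}$ contains a segment of length at least $T\ge4L+8\delta+3$, then $\tau_2\cap\mathcal{H}$ contains a segment of length at least $T-(4L+8\delta)$.
   Context: $\Gamma$ is a finitely generated group hyperbolic relative to a finite collection $\mathcal{P}$ of infinite subgroups, with finite symmetric generating set $\mathcal{S}$ such that $P\cap\mathcal{S}$ generates $P$ for each $P\in\mathcal{P}$. $X$ is the Groves–Manning cusped space: $\mathrm{Cay}(\Gamma,\mathcal{S})$ with a combinatorial horoball glued along each left coset $gP$; it is a locally finite graph with unit-length edges and metric $d_X$, and $\delta\ge1$ is an integer such that $X$ is $\delta$-hyperbolic. Depth $D_X$ of a vertex is its distance to the Cayley graph, extended linearly over edges. A horoball is the smallest full subgraph containing the closure of a component of $D_X^{-1}(0,\infty)$; for an integer $k>0$ a $k$-horoball is a component of $D_X^{-1}[k,\infty)$. A geodesic $\gamma:[a,b]\to\mathcal{H}$ in a horoball is regular if there are $a\le A\le B\le b$ with $B-A\le3$ such that $\frac{d}{dt}D_X(\gamma(t))$ is $1$ for $t<A$, $0$ for $A<t<B$, $-1$ for $t>B$; a geodesic in $X$ is regular if every intersection with a horoball is regular. *)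

From Stdlib Require Import Reals List Lra.
From Coquelicot Require Import Coquelicot.
Open Scope R_scope.

Record CuspData := {
  cG : Type;
  cmul : cG -> cG -> cG;
  cinv : cG -> cG;
  ce : cG;
  cI : Type;
  cP : cI -> cG -> Prop;
  cS : list cG
}.

Section Cusped.
Variable cd : CuspData.
Local Notation G := (cG cd).
Local Notation mul := (cmul cd).
Local Notation inv := (cinv cd).
Local Notation e := (ce cd).
Local Notation I := (cI cd).
Local Notation P := (cP cd).
Local Notation Sg := (cS cd).

Definition gprod (w : list G) : G := fold_right mul e w.

Definition StandingAssumptions : Prop :=
  (forall x y z, mul x (mul y z) = mul (mul x y) z) /\
  (forall x, mul e x = x) /\ (forall x, mul x e = x) /\
  (forall x, mul (inv x) x = e) /\ (forall x, mul x (inv x) = e) /\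
  (* the collection P is finite and is a set (no repetitions) *)
  (exists l : list I, forall i, In i l) /\
  (forall i j, (forall x, P i x <-> P j x) -> i = j) /\
  (forall i, P i e /\ (forall x y, P i x -> P i y -> P i (mul x y))
             /\ (forall x, P i x -> P i (inv x))) /\
  (forall i, ~ exists l : list G, forall x, P i x -> In x l) /\
  (forall s, In s Sg -> In (inv s) Sg) /\
  (forall g, exists w, (forall s, In s w -> In s Sg) /\ gprod w = g) /\
  (forall i x, P i x ->
     exists w, (forall s, In s w -> In s Sg /\ P i s) /\ gprod w = x).

(** * The Groves–Manning cusped space as a graph *)
(** Vertices: Cayley vertices, and horoball vertices [Hor i h n] standing for the
    vertex (h, n+1) of the combinatorial horoball over the coset h P_i. *)
Inductive Vtx : Type :=
| Cay : G -> Vtx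
| Hor : I -> G -> nat -> Vtx.

Definition wl_le (i : I) (x : G) (n : nat) : Prop :=
  exists w, (length w <= n)%nat /\ (forall s, In s w -> In s Sg /\ P i s) /\ gprod w = x.

Definition adj0 (u v : Vtx) : Prop :=
  match u, v with
  | Cay g, Cay g' => exists s, In s Sg /\ g' = mul g s /\ g <> g'
  | Cay g, Hor _ h n => h = g /\ n = 0%nat
  | Hor i h n, Hor j h' m =>
      (i = j /\ h = h' /\ m = S n) \/
      (i = j /\ n = m /\ h <> h' /\ wl_le i (mul (inv h) h') (2 ^ (S n)))
  | _, _ => False
  end.

Definition adj (u v : Vtx) : Prop := adj0 u v \/ adj0 v u.

Fixpoint walk (n : nat) (u v : Vtx) : Prop :=
  match n with
  | O => u = v
  | S n => exists w, adj u w /\ walk n w v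
  end.

Definition dV (u v : Vtx) : R :=
  real (Glb_Rbar (fun r => exists n, r = INR n /\ walk n u v)).

(** A point is a vertex [u] (represented as [u,u,0]) or a point at parameter
    [t] on an edge [u -- v].  Different representatives of the same geometric
    point are at distance 0 for [dX]. *)
Record Pt : Type := mkPt {
  pu : Vtx; pv : Vtx; pt : R;
  pvalid : (adj pu pv /\ 0 <= pt <= 1) \/ (pu = pv /\ pt = 0) }.

Definition dcand (p q : Pt) (r : R) : Prop :=
  (pu p = pu q /\ pv p = pv q /\ r = Rabs (pt p - pt q)) \/
  (pu p = pv q /\ pv p = pu q /\ r = Rabs (pt p - (1 - pt q))) \/
  (exists x y ex ey,
      ((x = pu p /\ ex = pt p) \/ (x = pv p /\ ex = 1 - pt p)) /\
      ((y = pu q /\ ey = pt q) \/ (y = pv q /\ ey = 1 - pt q)) /\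
      r = ex + dV x y + ey).

Definition dX (p q : Pt) : R := real (Glb_Rbar (dcand p q)).

Definition depthV (v : Vtx) : R :=
  real (Glb_Rbar (fun r => exists g, r = dV v (Cay g))).

Definition depth (p : Pt) : R := (1 - pt p) * depthV (pu p) + pt p * depthV (pv p).

Definition Xopen (U : Pt -> Prop) : Prop :=
  forall p, U p -> exists eps, 0 < eps /\ forall q, dX p q < eps -> U q.

Definition Xconnected (C : Pt -> Prop) : Prop :=
  ~ exists U V, Xopen U /\ Xopen V /\
      (forall p, C p -> U p \/ V p) /\
      (exists p, C p /\ U p) /\ (exists p, C p /\ V p) /\
      (forall p, C p -> U p -> V p -> False).

Definition component (A C : Pt -> Prop) : Prop :=
  (forall p, C p -> A p) /\ (exists p, C p) /\ Xconnected C /\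
  (forall C', (forall p, C p -> C' p) -> (forall p, C' p -> A p) ->
              Xconnected C' -> forall p, C' p -> C p).

Definition closure (C : Pt -> Prop) (q : Pt) : Prop :=
  forall eps, 0 < eps -> exists p, C p /\ dX p q < eps.

(** points of the full subgraph spanned by the vertex set [W] *)
Definition fullsub (W : Vtx -> Prop) (p : Pt) : Prop :=
  (pt p = 0 /\ W (pu p)) \/ (pt p = 1 /\ W (pv p)) \/ (W (pu p) /\ W (pv p)).

(** A horoball: the smallest full subgraph containing the closure of a
    component of D_X^{-1}(0, oo). *)
Definition is_horoball (H : Pt -> Prop) : Prop :=
  exists C, component (fun p => 0 < depth p) C /\
  exists W : Vtx -> Prop,
    (forall q, closure C q -> fullsub W q) /\
    (forall W', (forall q, closure C q -> fullsub W' q) -> forall v, W v -> W' v) /\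
    (forall p, H p <-> fullsub W p).

Definition is_khoroball (k : nat) (H : Pt -> Prop) : Prop :=
  component (fun p => INR k <= depth p) H.

Definition geodesic (g : R -> Pt) (a b : R) : Prop :=
  a <= b /\ forall s t, a <= s <= b -> a <= t <= b -> dX (g s) (g t) = Rabs (s - t).

Definition hyperbolic (delta : R) : Prop :=
  forall (g1 g2 g3 : R -> Pt) (a1 b1 a2 b2 a3 b3 : R),
    geodesic g1 a1 b1 -> geodesic g2 a2 b2 -> geodesic g3 a3 b3 ->
    dX (g1 b1) (g2 a2) = 0 -> dX (g2 b2) (g3 a3) = 0 -> dX (g3 b3) (g1 a1) = 0 ->
    forall s, a1 <= s <= b1 ->
      exists t, (a2 <= t <= b2 /\ dX (g1 s) (g2 t) <= delta) \/
                (a3 <= t <= b3 /\ dX (g1 s) (g3 t) <= delta).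

Definition regular_piece (g : R -> Pt) (c d : R) : Prop :=
  exists A B, c <= A <= B /\ B <= d /\ B - A <= 3 /\
    (forall t, c < t < A -> is_derive (fun s => depth (g s)) t 1) /\
    (forall t, A < t < B -> is_derive (fun s => depth (g s)) t 0) /\
    (forall t, B < t < d -> is_derive (fun s => depth (g s)) t (-1)).

(** a geodesic is regular if every intersection with a horoball (i.e. every
    maximal subinterval mapped into a horoball) is regular *)
Definition regular_geodesic (g : R -> Pt) (a b : R) : Prop :=
  geodesic g a b /\
  forall H, is_horoball H ->
    forall c d, a <= c <= d -> d <= b ->
      (forall t, c <= t <= d -> H (g t)) ->
      (forall c' d', a <= c' <= c -> d <= d' <= b ->
          (forall t, c' <= t <= d' -> H (g t)) -> c' = c /\ d' = d) ->
      regular_piece g c d.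

Definition contains_segment (g : R -> Pt) (a b : R) (H : Pt -> Prop) (T : R) : Prop :=
  exists c d, a <= c <= d /\ d <= b /\ T <= d - c /\ forall t, c <= t <= d -> H (g t).

End Cusped.

(** The depth along a regular geodesic that stays in a horoball for time [T] is a
    tent: it rises with slope 1, stays flat for at most 3, then falls with slope 1,
    so the middle of the segment is deeper than the floor of the horoball (depth 0,
    or [k] for a [k]-horoball) by about [T/2].  By [delta]-hyperbolicity applied to
    the quadrilateral with sides [tau1], [tau2] and two sides of length at most [L],
    every point [tau2 u] not within [L + 4 delta] of the (shifted) ends of the
    segment is [2 delta]-close to a point [tau1 t] of the segment that is deeper
    than the floor by more than [2 delta].  A geodesic from [tau1 t] to [tau2 u]
    then stays deeper than the floor, hence inside the connected component of the
    deep set that defines the horoball, and so [tau2 u] lies in the horoball. *)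

From Pilot Require Import Defs.
From Stdlib Require Import Reals List Lra Lia Wf_nat Classical.
From Coquelicot Require Import Coquelicot.
Import ListNotations.
Open Scope R_scope.

Lemma Glb_Rbar_least (E : R -> Prop) (m : R) :
  E m -> (forall r, E r -> m <= r) -> real (Glb_Rbar E) = m.
Proof.
  intros Hm Hl. rewrite (is_glb_Rbar_unique E (Finite m)); [reflexivity|].
  split; [intros x Hx; apply Hl, Hx | intros b Hb; exact (Hb m Hm)].
Qed.

Lemma exists_least_nat (P : nat -> Prop) :
  (exists n, P n) -> exists m, P m /\ forall k, P k -> (m <= k)%nat.
Proof.
  intros Hex.
  destruct (dec_inh_nat_subset_has_unique_least_element P (fun n => classic (P n)) Hex)
    as [m [Hm _]].
  exists m; exact Hm.
Qed.

Lemma finite_set_has_min (E : R -> Prop) (l : list R) :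
  (forall r, E r -> In r l) -> (exists r, E r) -> exists m, E m /\ forall r, E r -> m <= r.
Proof.
  revert E; induction l as [|a l IH]; intros E HE [r Hr]; [destruct (HE r Hr)|].
  destruct (classic (exists r, E r /\ r <> a)) as [Hex|Hno].
  - destruct (IH (fun r => E r /\ r <> a)) as [m [[Hm _] Hmin]]; [|exact Hex|].
    { intros x [Hx Hxa]. destruct (HE x Hx); [congruence|auto]. }
    destruct (classic (E a /\ a <= m)) as [[Ha Ham]|Hna].
    + exists a; split; [exact Ha|]. intros x Hx.
      destruct (classic (x = a)) as [->|Hxa]; [lra|]. specialize (Hmin x (conj Hx Hxa)); lra.
    + exists m; split; [exact Hm|]. intros x Hx.
      destruct (classic (x = a)) as [->|Hxa]; [|apply Hmin; auto].
      destruct (Rle_dec a m); [exfalso; tauto|lra].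
  - exists r; split; [exact Hr|]. intros x Hx.
    assert (x = a) by (apply NNPP; intro; apply Hno; eauto).
    assert (r = a) by (apply NNPP; intro; apply Hno; eauto). subst; lra.
Qed.

Lemma lub_approx (E : R -> Prop) m y : is_lub E m -> y < m -> exists x, E x /\ y < x.
Proof.
  intros [_ Hl] Hy. apply NNPP. intro Hno.
  enough (m <= y) by lra. apply Hl. intros x Hx.
  destruct (Rle_dec x y); [auto|exfalso; apply Hno; exists x; split; [auto|lra]].
Qed.

Lemma Rabs_mult_le_1 a b c : Rabs a <= c -> Rabs b <= 1 -> Rabs (a * b) <= c.
Proof.
  intros H1 H2. rewrite Rabs_mult. pose proof (Rabs_pos a).
  apply Rle_trans with (Rabs a * 1); [apply Rmult_le_compat_l; auto|lra].
Qed.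

Lemma convex_comb_pos a b s r : 0 <= a -> 0 <= b -> 0 < s < 1 -> 0 < r < 1 ->
  0 < (1 - s) * a + s * b -> 0 < (1 - r) * a + r * b.
Proof.
  intros Ha Hb Hs Hr Hpos.
  assert (0 <= (1 - r) * a) by (apply Rmult_le_pos; lra).
  assert (0 <= r * b) by (apply Rmult_le_pos; lra).
  destruct (Rlt_dec 0 a).
  - assert (0 < (1 - r) * a) by (apply Rmult_lt_0_compat; lra). lra.
  - assert (a = 0) by lra. subst a.
    assert (0 < b) by nra. assert (0 < r * b) by (apply Rmult_lt_0_compat; lra). lra.
Qed.

Lemma slope_of_constant_derivative (f : R -> R) x y k :
  (forall s t, x <= s <= y -> x <= t <= y -> Rabs (f s - f t) <= Rabs (s - t)) -> x <= y ->
  (forall u, x < u < y -> is_derive f u k) -> f y - f x = k * (y - x).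
Proof.
  intros HL Hxy Hd.
  set (cl := fun u => Rmax x (Rmin y u)).
  assert (Hcl : forall u, x <= cl u <= y)
    by (intros u; unfold cl, Rmax, Rmin; repeat destruct Rle_dec; lra).
  assert (Hcl_lip : forall u v, Rabs (cl u - cl v) <= Rabs (u - v)).
  { intros u v. unfold cl, Rmax, Rmin. apply Rabs_le.
    repeat destruct Rle_dec; unfold Rabs; destruct Rcase_abs; lra. }
  assert (Hcl_id : forall u, x <= u <= y -> cl u = u)
    by (intros u Hu; unfold cl, Rmax, Rmin; repeat destruct Rle_dec; lra).
  (* Clamping extends [f] to a globally 1-Lipschitz, hence continuous, function. *)
  set (h := fun u => f (cl u)).
  assert (Hh_cont : forall u, continuity_pt h u).
  { intros u eps He. exists eps. split; [exact He|]. intros v [_ Hv]. simpl in *.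
    unfold R_dist in *. eapply Rle_lt_trans; [|exact Hv].
    eapply Rle_trans; [apply HL; apply Hcl|apply Hcl_lip]. }
  destruct (MVT_gen h x y (fun _ => k)) as [c [_ E]].
  - intros u Hu. rewrite Rmin_left in Hu by lra. rewrite Rmax_right in Hu by lra.
    apply (is_derive_ext_loc f h); [|apply Hd; auto].
    apply (locally_interval _ u x y); simpl; try lra.
    intros v Hv1 Hv2. unfold h. rewrite Hcl_id; auto; lra.
  - intros u _. apply Hh_cont.
  - unfold h in E. rewrite !Hcl_id in E by lra. exact E.
Qed.

Lemma tent_lower_bound (f : R -> R) cs ds A B c d :
  (forall s t, cs <= s <= ds -> cs <= t <= ds -> Rabs (f s - f t) <= Rabs (s - t)) ->
  cs <= A <= B -> B <= ds -> B - A <= 3 ->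
  (forall t, cs < t < A -> is_derive f t 1) ->
  (forall t, A < t < B -> is_derive f t 0) ->
  (forall t, B < t < ds -> is_derive f t (-1)) ->
  cs <= c -> d <= ds -> 3 <= d - c ->
  forall t K m, c <= t <= d -> K <= f c -> K <= f d ->
    m <= t - c -> m <= d - t -> m <= (d - c - 3) / 2 -> K + m <= f t.
Proof.
  intros HL HA HB H3 D1 D2 D3 Hc Hd Hdc t K m Ht K1 K2 M1 M2 M3.
  assert (Slope : forall k lo hi, (forall u, lo < u < hi -> is_derive f u k) ->
            forall x y, lo <= x <= y -> y <= hi -> cs <= lo -> hi <= ds -> f y - f x = k * (y - x)).
  { intros k lo hi Hk x y Hx Hy Hlo Hhi. apply slope_of_constant_derivative; try lra.
    - intros; apply HL; lra.
    - intros u Hu; apply Hk; lra. }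
  pose proof (Slope 1 cs A D1) as Up. pose proof (Slope 0 A B D2) as Flat.
  pose proof (Slope (-1) B ds D3) as Down.
  destruct (Rle_dec t A); [pose proof (Up c t ltac:(lra) ltac:(lra)); lra|].
  destruct (Rle_dec B t); [pose proof (Down t d ltac:(lra) ltac:(lra)); lra|].
  pose proof (Flat A t ltac:(lra) ltac:(lra)). pose proof (Flat t B ltac:(lra) ltac:(lra)).
  destruct (Rle_dec c A); destruct (Rle_dec B d).
  - pose proof (Up c A ltac:(lra) ltac:(lra)). pose proof (Down B d ltac:(lra) ltac:(lra)). lra.
  - pose proof (Up c A ltac:(lra) ltac:(lra)). lra.
  - pose proof (Down B d ltac:(lra) ltac:(lra)). lra.
  - lra.
Qed.

Lemma sup_of_extensions (P : R -> Prop) c d b :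
  c <= d <= b -> (forall t, c <= t <= d -> P t) ->
  (forall x y, c <= y < x -> x <= b -> (forall t, y <= t < x -> P t) -> P x) ->
  exists ds, d <= ds <= b /\ (forall t, c <= t <= ds -> P t) /\
    forall y, y <= b -> (forall t, c <= t <= y -> P t) -> y <= ds.
Proof.
  intros Hcdb HP Hclosed.
  set (E := fun y => d <= y <= b /\ forall t, c <= t <= y -> P t).
  destruct (completeness E) as [ds Hds].
  { exists b; intros y [Hy _]; lra. }
  { exists d; split; [lra|exact HP]. }
  assert (Hds1 : d <= ds) by (apply (proj1 Hds); split; [lra|exact HP]).
  assert (Hds2 : ds <= b) by (apply (proj2 Hds); intros y [Hy _]; lra).
  assert (Below : forall t, c <= t < ds -> P t).
  { intros t Ht. destruct (lub_approx E ds t Hds ltac:(lra)) as [y [[_ Hy] Hty]].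
    apply Hy; lra. }
  exists ds. split; [lra|split].
  - intros t Ht. destruct (Req_dec t ds) as [->|Hne]; [|apply Below; lra].
    destruct (Req_dec c ds) as [<-|Hne']; [apply HP; lra|].
    apply (Hclosed ds c); [lra|lra|exact Below].
  - intros y Hy HPy. destruct (Rle_dec d y); [|lra].
    apply (proj1 Hds). split; [lra|exact HPy].
Qed.

Lemma maximal_subinterval (P : R -> Prop) a b c d :
  a <= c <= d -> d <= b -> (forall t, c <= t <= d -> P t) ->
  (forall x y, a <= x < y -> y <= b -> (forall t, x < t <= y -> P t) -> P x) ->
  (forall x y, a <= y < x -> x <= b -> (forall t, y <= t < x -> P t) -> P x) ->
  exists cs ds, a <= cs <= c /\ d <= ds <= b /\ (forall t, cs <= t <= ds -> P t) /\
    (forall c' d', a <= c' <= cs -> ds <= d' <= b ->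
       (forall t, c' <= t <= d' -> P t) -> c' = cs /\ d' = ds).
Proof.
  intros Hac Hdb HP Hleft Hright.
  destruct (sup_of_extensions (fun t => P (- t)) (- d) (- c) (- a)) as [ms [Hms [HPms Hmax_l]]].
  { lra. }
  { intros t Ht. apply HP; lra. }
  { intros x y Hyx Hx HPyx. apply (Hleft (- x) (- y)); try lra.
    intros t Ht. replace t with (- - t) by ring. apply HPyx; lra. }
  set (cs := - ms).
  assert (HPcs : forall t, cs <= t <= d -> P t)
    by (intros t Ht; replace t with (- - t) by ring; apply HPms; unfold cs in *; lra).
  destruct (sup_of_extensions P cs d b) as [ds [Hds [HPds Hmax_r]]].
  { unfold cs; lra. }
  { exact HPcs. }
  { intros x y Hyx Hx HPyx. apply (Hright x y); [unfold cs in *; lra|lra|exact HPyx]. }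
  exists cs, ds. split; [unfold cs; lra|split; [lra|split; [exact HPds|]]].
  intros c' d' Hc' Hd' HP'.
  assert (- c' <= ms).
  { apply Hmax_l; [lra|]. intros t Ht. apply HP'; lra. }
  assert (d' <= ds).
  { apply Hmax_r; [lra|]. intros t Ht. apply HP'; unfold cs in *; lra. }
  unfold cs in *; split; lra.
Qed.

(** * The path metric of the cusped space *)

Section CuspedSpace.
Variable cd : CuspData.
Hypothesis hSA : StandingAssumptions cd.

Local Notation G := (cG cd).
Local Notation mul := (cmul cd).
Local Notation e := (ce cd).
Local Notation Vtx := (Vtx cd).
Local Notation Cay := (Cay cd).
Local Notation Hor := (Hor cd).
Local Notation Pt := (Pt cd).
Local Notation pu := (pu cd).
Local Notation pv := (pv cd).
Local Notation pt := (pt cd).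
Local Notation adj := (adj cd).
Local Notation walk := (walk cd).
Local Notation dV := (dV cd).
Local Notation dX := (dX cd).
Local Notation dcand := (dcand cd).
Local Notation depthV := (depthV cd).
Local Notation depth := (depth cd).
Local Notation Xopen := (Xopen cd).
Local Notation Xconnected := (Xconnected cd).
Local Notation component := (component cd).
Local Notation closure := (closure cd).
Local Notation fullsub := (fullsub cd).
Local Notation geodesic := (geodesic cd).

Lemma adj_sym u v : adj u v -> adj v u.
Proof. unfold Defs.adj; tauto. Qed.

Lemma adj_irrefl u : ~ adj u u.
Proof.
  unfold Defs.adj, adj0. destruct u; intros [H|H]; try tauto.
  - destruct H as [s [_ [_ H]]]; auto.
  - destruct H as [s [_ [_ H]]]; auto.
  - destruct H as [[_ [_ H]]|[_ [_ [H _]]]]; auto. lia.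
  - destruct H as [[_ [_ H]]|[_ [_ [H _]]]]; auto. lia.
Qed.

Lemma walk_app n m u v w : walk n u v -> walk m v w -> walk (n + m) u w.
Proof.
  revert u; induction n as [|n IH]; intros u H1 H2; simpl in *; [subst; exact H2|].
  destruct H1 as [x [Hx Hw]]. exists x; split; [exact Hx|]. eapply IH; eauto.
Qed.

Lemma walk_rev n u v : walk n u v -> walk n v u.
Proof.
  revert u v; induction n as [|n IH]; intros u v H; simpl in H; [simpl; congruence|].
  destruct H as [x [Hx Hw]]. replace (S n) with (n + 1)%nat by lia.
  eapply walk_app; [exact (IH _ _ Hw)|]. exists u; split; [apply adj_sym; exact Hx|reflexivity].
Qed.

Lemma walk_word (w : list G) (x : G) :
  (forall s, In s w -> In s (cS cd)) -> exists n, walk n (Cay x) (Cay (mul x (gprod cd w))).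
Proof.
  destruct hSA as [Hass [_ [Hr _]]].
  revert x; induction w as [|s w IH]; intros x Hw; simpl.
  - exists 0%nat. simpl. rewrite Hr. reflexivity.
  - destruct (IH (mul x s)) as [n Hn]; [intros; apply Hw; simpl; auto|].
    rewrite Hass. destruct (classic (x = mul x s)) as [Heq|Hne].
    + exists n. rewrite <- Heq in Hn |- *. exact Hn.
    + exists (S n), (Cay (mul x s)). split; [|exact Hn].
      left. exists s. split; [apply Hw; simpl; auto|auto].
Qed.

Lemma walk_hor i h n : exists m, walk m (Cay h) (Hor i h n).
Proof.
  induction n as [|n [m Hm]].
  - exists 1%nat, (Hor i h 0). split; [left; simpl; auto|reflexivity].
  - exists (m + 1)%nat. eapply walk_app; [exact Hm|].
    exists (Hor i h (S n)). split; [left; simpl; left; auto|reflexivity].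
Qed.

Lemma walk_from_e v : exists n, walk n (Cay e) v.
Proof.
  destruct hSA as [_ [Hl [_ [_ [_ [_ [_ [_ [_ [_ [Hgen _]]]]]]]]]]].
  destruct v as [g|i h k].
  - destruct (Hgen g) as [w [Hw1 Hw2]]. destruct (walk_word w e Hw1) as [n Hn].
    rewrite Hl, Hw2 in Hn. eauto.
  - destruct (Hgen h) as [w [Hw1 Hw2]]. destruct (walk_word w e Hw1) as [n Hn].
    rewrite Hl, Hw2 in Hn. destruct (walk_hor i h k) as [m Hm].
    exists (n + m)%nat. eapply walk_app; eauto.
Qed.

Lemma walk_exists u v : exists n, walk n u v.
Proof.
  destruct (walk_from_e u) as [n Hn]. destruct (walk_from_e v) as [m Hm].
  exists (n + m)%nat. eapply walk_app; [apply walk_rev|]; eauto.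
Qed.

Lemma dV_spec u v :
  exists n, walk n u v /\ dV u v = INR n /\ forall m, walk m u v -> (n <= m)%nat.
Proof.
  destruct (exists_least_nat (fun n => walk n u v) (walk_exists u v)) as [n [Hn Hm]].
  exists n; split; [exact Hn|split; [|exact Hm]].
  apply Glb_Rbar_least; [eauto|]. intros r [k [-> Hk]]. apply le_INR; auto.
Qed.

Lemma dV_le_walk u v n : walk n u v -> dV u v <= INR n.
Proof. intros H. destruct (dV_spec u v) as [k [_ [-> Hk]]]. apply le_INR; auto. Qed.

Lemma dV_ge0 u v : 0 <= dV u v.
Proof. destruct (dV_spec u v) as [k [_ [-> _]]]. apply pos_INR. Qed.

Lemma dV_refl u : dV u u = 0.
Proof. pose proof (dV_le_walk u u 0 eq_refl). pose proof (dV_ge0 u u). simpl in *; lra. Qed.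

Lemma dV_sym u v : dV u v = dV v u.
Proof.
  destruct (dV_spec u v) as [k [Hk [Hd _]]]. destruct (dV_spec v u) as [k' [Hk' [Hd' _]]].
  pose proof (dV_le_walk _ _ _ (walk_rev _ _ _ Hk)).
  pose proof (dV_le_walk _ _ _ (walk_rev _ _ _ Hk')). lra.
Qed.

Lemma dV_tri u v w : dV u w <= dV u v + dV v w.
Proof.
  destruct (dV_spec u v) as [k [Hk [Hd _]]]. destruct (dV_spec v w) as [k' [Hk' [Hd' _]]].
  pose proof (dV_le_walk _ _ _ (walk_app _ _ _ _ _ Hk Hk')) as H. rewrite plus_INR in H. lra.
Qed.

Lemma dV_adj u v : adj u v -> dV u v <= 1.
Proof. intros H. apply (dV_le_walk u v 1). exists v; split; [exact H|reflexivity]. Qed.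

Lemma dV_lt1 u v : dV u v < 1 -> u = v.
Proof.
  intros H. destruct (dV_spec u v) as [[|k] [Hk [Hd _]]]; [exact Hk|].
  rewrite Hd, S_INR in H. pose proof (pos_INR k). lra.
Qed.

Lemma depthV_spec v :
  exists g, depthV v = dV v (Cay g) /\ forall g', depthV v <= dV v (Cay g').
Proof.
  destruct (exists_least_nat (fun n => exists g, dV v (Cay g) = INR n)) as [n [[g Hg] Hm]].
  { destruct (dV_spec v (Cay e)) as [k [_ [Hk _]]]. eauto. }
  assert (Hcay : forall g', INR n <= dV v (Cay g')).
  { intros g'. destruct (dV_spec v (Cay g')) as [k [_ [Hk _]]]. rewrite Hk.
    apply le_INR, Hm. eauto. }
  assert (Hd : depthV v = INR n).
  { apply Glb_Rbar_least; [exists g; auto|]. intros r [g' ->]. apply Hcay. }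
  exists g. split; [congruence|]. intros g'. rewrite Hd. apply Hcay.
Qed.

Lemma depthV_ge0 v : 0 <= depthV v.
Proof. destruct (depthV_spec v) as [g [-> _]]. apply dV_ge0. Qed.

Lemma depthV_lip u v : depthV u <= depthV v + dV u v.
Proof.
  destruct (depthV_spec v) as [g [Hg _]]. destruct (depthV_spec u) as [_ [_ Hu]].
  specialize (Hu g). pose proof (dV_tri u v (Cay g)). lra.
Qed.

Lemma depthV_adj u v : adj u v -> Rabs (depthV u - depthV v) <= 1.
Proof.
  intros H. pose proof (dV_adj _ _ H). pose proof (depthV_lip u v). pose proof (depthV_lip v u).
  rewrite (dV_sym v u) in *. apply Rabs_le; lra.
Qed.

Definition edge_end (p : Pt) (x : Vtx) (ex : R) : Prop :=
  (x = pu p /\ ex = pt p) \/ (x = pv p /\ ex = 1 - pt p).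

Definition dcand_edge (p q : Pt) (r : R) : Prop :=
  (pu p = pu q /\ pv p = pv q /\ r = Rabs (pt p - pt q)) \/
  (pu p = pv q /\ pv p = pu q /\ r = Rabs (pt p - (1 - pt q))).

Definition dcand_via (p q : Pt) (r : R) : Prop :=
  exists x y ex ey, edge_end p x ex /\ edge_end q y ey /\ r = ex + dV x y + ey.

Lemma pt_range p : 0 <= pt p <= 1.
Proof. destruct (pvalid cd p) as [[_ H]|[_ H]]; lra. Qed.

Lemma edge_end_range p x ex : edge_end p x ex -> 0 <= ex <= 1.
Proof. pose proof (pt_range p). intros [[_ ->]|[_ ->]]; lra. Qed.

Lemma dcand_iff p q r : dcand p q r <-> dcand_edge p q r \/ dcand_via p q r.
Proof. unfold Defs.dcand, dcand_edge, dcand_via, edge_end. tauto. Qed.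

Lemma dX_spec p q : dcand p q (dX p q) /\ forall r, dcand p q r -> dX p q <= r.
Proof.
  destruct (finite_set_has_min (dcand p q)
     [Rabs (pt p - pt q); Rabs (pt p - (1 - pt q));
      pt p + dV (pu p) (pu q) + pt q; pt p + dV (pu p) (pv q) + (1 - pt q);
      (1 - pt p) + dV (pv p) (pu q) + pt q; (1 - pt p) + dV (pv p) (pv q) + (1 - pt q)])
    as [m [Hm Hmin]].
  - intros r Hr. apply dcand_iff in Hr.
    destruct Hr as [[[_ [_ ->]]|[_ [_ ->]]]|[x [y [ex [ey [Hx [Hy ->]]]]]]]; [simpl; tauto..|].
    destruct Hx as [[-> ->]|[-> ->]]; destruct Hy as [[-> ->]|[-> ->]]; simpl; tauto.
  - exists (pt p + dV (pu p) (pu q) + pt q). apply dcand_iff. right.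
    exists (pu p), (pu q), (pt p), (pt q). unfold edge_end. tauto.
  - unfold Defs.dX. rewrite (Glb_Rbar_least _ m Hm Hmin). auto.
Qed.

Lemma dX_le p q r : dcand p q r -> dX p q <= r.
Proof. apply dX_spec. Qed.

Lemma dX_le_via p q x y ex ey :
  edge_end p x ex -> edge_end q y ey -> dX p q <= ex + dV x y + ey.
Proof. intros. apply dX_le, dcand_iff. right. exists x, y, ex, ey. auto. Qed.

Lemma dcand_edge_ge0 p q r : dcand_edge p q r -> 0 <= r.
Proof. intros [[_ [_ ->]]|[_ [_ ->]]]; apply Rabs_pos. Qed.

Lemma dX_ge0 p q : 0 <= dX p q.
Proof.
  destruct (proj1 (dcand_iff _ _ _) (proj1 (dX_spec p q)))
    as [H|[x [y [ex [ey [Hx [Hy ->]]]]]]]; [exact (dcand_edge_ge0 _ _ _ H)|].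
  pose proof (edge_end_range _ _ _ Hx). pose proof (edge_end_range _ _ _ Hy).
  pose proof (dV_ge0 x y). lra.
Qed.

Lemma dX_le0 p q : dX p q <= 0 -> dX p q = 0.
Proof. pose proof (dX_ge0 p q). lra. Qed.

Lemma dX_refl p : dX p p = 0.
Proof.
  apply dX_le0. replace 0 with (Rabs (pt p - pt p)) by (rewrite Rminus_diag, Rabs_R0; auto).
  apply dX_le, dcand_iff. left; left; auto.
Qed.

Lemma dcand_edge_sym p q r : dcand_edge p q r -> dcand_edge q p r.
Proof.
  intros [[H1 [H2 ->]]|[H1 [H2 ->]]].
  - left. repeat split; auto. apply Rabs_minus_sym.
  - right. repeat split; auto. f_equal. lra.
Qed.

Lemma dcand_sym p q r : dcand p q r -> dcand q p r.
Proof.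
  rewrite !dcand_iff. intros [H|[x [y [ex [ey [Hx [Hy ->]]]]]]].
  - left; apply dcand_edge_sym; auto.
  - right. exists y, x, ey, ex. repeat split; auto. rewrite (dV_sym x y). lra.
Qed.

Lemma dX_sym p q : dX p q = dX q p.
Proof.
  destruct (dX_spec p q) as [H1 H2]. destruct (dX_spec q p) as [H3 H4].
  apply Rle_antisym; [apply H2, dcand_sym; auto | apply H4, dcand_sym; auto].
Qed.

Lemma dcand_edge_end p q r x ex :
  dcand_edge p q r -> edge_end q x ex -> exists ex', edge_end p x ex' /\ ex' <= r + ex.
Proof.
  intros HC Hx. pose proof (pt_range p) as Rp. pose proof (pt_range q) as Rq.
  destruct HC as [[H1 [H2 ->]]|[H1 [H2 ->]]]; destruct Hx as [[-> ->]|[-> ->]].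
  - exists (pt p). split; [left; auto|]. pose proof (Rle_abs (pt p - pt q)). lra.
  - exists (1 - pt p). split; [right; auto|].
    pose proof (Rle_abs (- (pt p - pt q))) as H. rewrite Rabs_Ropp in H. lra.
  - exists (1 - pt p). split; [right; auto|].
    pose proof (Rle_abs (- (pt p - (1 - pt q)))) as Hab. rewrite Rabs_Ropp in Hab. lra.
  - exists (pt p). split; [left; auto|]. pose proof (Rle_abs (pt p - (1 - pt q))). lra.
Qed.

Lemma dV_edge_ends q y ey x ex : edge_end q y ey -> edge_end q x ex -> dV y x <= ey + ex.
Proof.
  intros Hy Hx. pose proof (edge_end_range _ _ _ Hy). pose proof (edge_end_range _ _ _ Hx).
  assert (Hadj : y = x \/ (adj y x /\ ey + ex = 1)).
  { destruct (pvalid cd q) as [[Ha _]|[Heq _]].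
    - destruct Hy as [[-> ->]|[-> ->]]; destruct Hx as [[-> ->]|[-> ->]]; auto.
      + right; split; [auto|lra].
      + right; split; [apply adj_sym; auto|lra].
    - destruct Hy as [[-> _]|[-> _]]; destruct Hx as [[-> _]|[-> _]]; auto. }
  destruct Hadj as [->|[Ha Hs]]; [rewrite dV_refl; lra|].
  pose proof (dV_adj y x Ha). lra.
Qed.

Lemma dcand_edge_trans p q w r1 r2 :
  dcand_edge p q r1 -> dcand_edge q w r2 -> exists r, dcand_edge p w r /\ r <= r1 + r2.
Proof.
  assert (Htri : forall a b c, Rabs (a - c) <= Rabs (a - b) + Rabs (b - c)).
  { intros a b c. replace (a - c) with ((a - b) + (b - c)) by ring. apply Rabs_triang. }
  intros [[A1 [A2 ->]]|[A1 [A2 ->]]] [[B1 [B2 ->]]|[B1 [B2 ->]]].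
  - eexists; split; [left; split; [congruence|split; [congruence|reflexivity]]|]. apply Htri.
  - eexists; split; [right; split; [congruence|split; [congruence|reflexivity]]|]. apply Htri.
  - eexists; split; [right; split; [congruence|split; [congruence|reflexivity]]|].
    pose proof (Htri (pt p) (1 - pt q) (1 - pt w)) as H.
    replace (1 - pt q - (1 - pt w)) with (pt w - pt q) in H by ring.
    rewrite (Rabs_minus_sym (pt w)) in H. lra.
  - eexists; split; [left; split; [congruence|split; [congruence|reflexivity]]|].
    pose proof (Htri (pt p) (1 - pt q) (pt w)) as H.
    replace (1 - pt q - pt w) with (- (pt q - (1 - pt w))) in H by ring.
    rewrite Rabs_Ropp in H. lra.
Qed.

Lemma dX_tri p q w : dX p w <= dX p q + dX q w.
Proof.
  destruct (dX_spec p q) as [H1 _]. destruct (dX_spec q w) as [H2 _].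
  set (r1 := dX p q) in *. set (r2 := dX q w) in *. clearbody r1 r2.
  apply dcand_iff in H1. apply dcand_iff in H2.
  destruct H1 as [H1|[x [y [ex [ey [Hx [Hy ->]]]]]]];
    destruct H2 as [H2|[x' [y' [ex' [ey' [Hx' [Hy' ->]]]]]]].
  - destruct (dcand_edge_trans _ _ _ _ _ H1 H2) as [r [Hr Hle]].
    pose proof (dX_le p w r (proj2 (dcand_iff _ _ _) (or_introl Hr))). lra.
  - destruct (dcand_edge_end _ _ _ _ _ H1 Hx') as [e1 [He1 Hle]].
    pose proof (dX_le_via _ _ _ _ _ _ He1 Hy'). lra.
  - destruct (dcand_edge_end _ _ _ _ _ (dcand_edge_sym _ _ _ H2) Hy) as [e1 [He1 Hle]].
    pose proof (dX_le_via _ _ _ _ _ _ Hx He1). lra.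
  - pose proof (dX_le_via _ _ _ _ _ _ Hx Hy').
    pose proof (dV_edge_ends _ _ _ _ _ Hy Hx').
    pose proof (dV_tri x y y'). pose proof (dV_tri y x' y'). lra.
Qed.

Lemma dX_zero_l p p' q : dX p p' = 0 -> dX p q = dX p' q.
Proof.
  intros H. pose proof (dX_tri p p' q). pose proof (dX_tri p' p q). pose proof (dX_sym p p'). lra.
Qed.

Lemma dX_zero_r p q q' : dX q q' = 0 -> dX p q = dX p q'.
Proof. intros H. rewrite (dX_sym p q), (dX_sym p q'). apply dX_zero_l; auto. Qed.

Definition vtx (v : Vtx) : Pt := mkPt cd v v 0 (or_intror (conj eq_refl eq_refl)).

Definition clamp01 (s : R) : R := Rmax 0 (Rmin 1 s).

Lemma clamp01_range s : 0 <= clamp01 s <= 1.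
Proof. unfold clamp01, Rmax, Rmin. repeat destruct Rle_dec; lra. Qed.

Lemma clamp01_id s : 0 <= s <= 1 -> clamp01 s = s.
Proof. unfold clamp01, Rmax, Rmin. repeat destruct Rle_dec; lra. Qed.

Lemma clamp01_lip a b : Rabs (clamp01 a - clamp01 b) <= Rabs (a - b).
Proof.
  unfold clamp01, Rmax, Rmin. apply Rabs_le.
  repeat destruct Rle_dec; unfold Rabs; destruct Rcase_abs; lra.
Qed.

(* Parameters outside [0, 1] are clamped, which makes [edge_pt u v Huv] total. *)
Definition edge_pt (u v : Vtx) (Huv : adj u v) (s : R) : Pt :=
  mkPt cd u v (clamp01 s) (or_introl (conj Huv (clamp01_range s))).

Lemma dX_edge_pt u v Huv a b : dX (edge_pt u v Huv a) (edge_pt u v Huv b) <= Rabs (a - b).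
Proof. eapply Rle_trans; [apply dX_le; left; simpl; auto|apply clamp01_lip]. Qed.

Lemma dX_vtx_edge_end p x ex : edge_end p x ex -> dX p (vtx x) <= ex.
Proof.
  intros H. pose proof (dX_le_via p (vtx x) x x ex 0 H (or_introl (conj eq_refl eq_refl))).
  rewrite dV_refl in *. lra.
Qed.

Lemma dX_edge_pt_u u v Huv s : dX (edge_pt u v Huv s) (vtx u) <= clamp01 s.
Proof. apply dX_vtx_edge_end. left. simpl. auto. Qed.

Lemma dX_edge_pt_v u v Huv s : dX (edge_pt u v Huv s) (vtx v) <= 1 - clamp01 s.
Proof. apply dX_vtx_edge_end. right. simpl. auto. Qed.

Lemma dX_edge_pt_pt u v Huv q : pu q = u -> pv q = v -> dX (edge_pt u v Huv (pt q)) q = 0.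
Proof.
  intros Hu Hv. apply dX_le0. eapply Rle_trans; [apply dX_le; left; simpl; repeat split; eauto|].
  rewrite clamp01_id by apply pt_range. rewrite Rminus_diag, Rabs_R0. lra.
Qed.

Lemma dX_edge_pt_pt_rev u v Huv q :
  pv q = u -> pu q = v -> dX (edge_pt u v Huv (1 - pt q)) q = 0.
Proof.
  intros Hu Hv. apply dX_le0.
  eapply Rle_trans; [apply dX_le; right; left; simpl; repeat split; eauto|].
  pose proof (pt_range q). rewrite clamp01_id by lra.
  replace (1 - pt q - (1 - pt q)) with 0 by ring. rewrite Rabs_R0. lra.
Qed.

Definition lipschitz1 (g : R -> Pt) (a b : R) : Prop :=
  forall s t, a <= s <= b -> a <= t <= b -> dX (g s) (g t) <= Rabs (s - t).

(* Endpoints are only matched up to [dX]-distance 0: points have several representatives. *)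
Definition path_of_length (p q : Pt) (D : R) : Prop :=
  exists g, 0 <= D /\ lipschitz1 g 0 D /\ dX (g 0) p = 0 /\ dX (g D) q = 0.

Lemma path_const p q D : 0 <= D -> dX p q = 0 -> path_of_length p q D.
Proof.
  intros HD H. exists (fun _ => p). repeat split; auto.
  - intros s t _ _. rewrite dX_refl. apply Rabs_pos.
  - apply dX_refl.
Qed.

Lemma path_congr p q p' q' D :
  path_of_length p q D -> dX p p' = 0 -> dX q q' = 0 -> path_of_length p' q' D.
Proof.
  intros [g [HD [HL [H0 H1]]]] Hp Hq. exists g. repeat split; auto.
  - apply dX_le0. pose proof (dX_tri (g 0) p p'). lra.
  - apply dX_le0. pose proof (dX_tri (g D) q q'). lra.
Qed.

Lemma path_concat p m q a b :
  path_of_length p m a -> path_of_length m q b -> path_of_length p q (a + b).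
Proof.
  intros [g1 [Ha [L1 [A1 B1]]]] [g2 [Hb [L2 [A2 B2]]]].
  assert (Hj : dX (g1 a) (g2 0) = 0).
  { apply dX_le0. pose proof (dX_tri (g1 a) m (g2 0)). rewrite (dX_sym m) in *. lra. }
  exists (fun s => if Rle_dec s a then g1 s else g2 (s - a)). repeat split.
  - lra.
  - intros s t Hs Ht. destruct (Rle_dec s a); destruct (Rle_dec t a).
    + apply L1; lra.
    + pose proof (dX_tri (g1 s) (g1 a) (g2 (t - a))).
      pose proof (dX_tri (g1 a) (g2 0) (g2 (t - a))).
      pose proof (L1 s a ltac:(lra) ltac:(lra)) as E2.
      pose proof (L2 0 (t - a) ltac:(lra) ltac:(lra)) as E3.
      rewrite Rabs_left1 in E2, E3 by lra. rewrite Rabs_left1 by lra. lra.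
    + pose proof (dX_tri (g2 (s - a)) (g1 a) (g1 t)).
      pose proof (dX_tri (g2 (s - a)) (g2 0) (g1 a)) as E1.
      pose proof (L1 a t ltac:(lra) ltac:(lra)) as E2.
      pose proof (L2 (s - a) 0 ltac:(lra) ltac:(lra)) as E3.
      rewrite (dX_sym (g2 0)), Hj in E1.
      rewrite Rabs_right in E2, E3 by lra. rewrite Rabs_right by lra. lra.
    + replace (s - t) with ((s - a) - (t - a)) by ring. apply L2; lra.
  - destruct (Rle_dec 0 a); [auto|lra].
  - destruct (Rle_dec (a + b) a).
    + assert (b = 0) by lra. subst b. rewrite Rplus_0_r.
      apply dX_le0. pose proof (dX_tri (g1 a) (g2 0) q). lra.
    + replace (a + b - a) with b by ring. auto.
Qed.

Lemma path_rev p q D : path_of_length p q D -> path_of_length q p D.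
Proof.
  intros [g [HD [L [A B]]]]. exists (fun s => g (D - s)). repeat split; auto.
  - intros s t Hs Ht. replace (s - t) with ((D - t) - (D - s)) by ring.
    rewrite dX_sym. apply L; lra.
  - replace (D - 0) with D by ring. auto.
  - replace (D - D) with 0 by ring. auto.
Qed.

Lemma path_along_edge u v Huv a b : 0 <= a <= 1 -> 0 <= b <= 1 ->
  path_of_length (edge_pt u v Huv a) (edge_pt u v Huv b) (Rabs (a - b)).
Proof.
  intros Ha Hb. destruct (Rle_dec a b).
  - exists (fun s => edge_pt u v Huv (a + s)). rewrite Rabs_left1 by lra. repeat split.
    + lra.
    + intros s t _ _. eapply Rle_trans; [apply dX_edge_pt|]. right; f_equal; ring.
    + rewrite Rplus_0_r. apply dX_refl.
    + replace (a + - (a - b)) with b by ring. apply dX_refl.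
  - exists (fun s => edge_pt u v Huv (a - s)). rewrite Rabs_right by lra. repeat split.
    + lra.
    + intros s t _ _. eapply Rle_trans; [apply dX_edge_pt|].
      right. rewrite <- Rabs_Ropp. f_equal; ring.
    + rewrite Rminus_0_r. apply dX_refl.
    + replace (a - (a - b)) with b by ring. apply dX_refl.
Qed.

Lemma path_to_edge_end p x ex : edge_end p x ex -> path_of_length p (vtx x) ex.
Proof.
  intros Hx. pose proof (edge_end_range p x ex Hx). pose proof (pt_range p) as Hp.
  destruct (pvalid cd p) as [[Ha _]|[Heq Ht]].
  - destruct Hx as [[-> ->]|[-> ->]].
    + pose proof (path_along_edge _ _ Ha (pt p) 0 Hp ltac:(lra)) as P.
      rewrite Rminus_0_r, Rabs_right in P by lra.
      eapply path_congr; [apply P|apply dX_edge_pt_pt; auto|].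
      apply dX_le0. eapply Rle_trans; [apply dX_edge_pt_u|]. rewrite clamp01_id; lra.
    + pose proof (path_along_edge _ _ Ha (pt p) 1 Hp ltac:(lra)) as P.
      rewrite Rabs_left1 in P by lra. replace (- (pt p - 1)) with (1 - pt p) in P by ring.
      eapply path_congr; [apply P|apply dX_edge_pt_pt; auto|].
      apply dX_le0. eapply Rle_trans; [apply dX_edge_pt_v|]. rewrite clamp01_id; lra.
  - apply path_const; [lra|]. apply dX_le0.
    assert (Hxp : x = pu p) by (destruct Hx as [[-> _]|[-> _]]; congruence). subst x.
    eapply Rle_trans; [apply (dX_vtx_edge_end p (pu p) (pt p)); left; auto|]. lra.
Qed.

Lemma path_walk n x y : walk n x y -> path_of_length (vtx x) (vtx y) (INR n).
Proof.
  revert x; induction n as [|n IH]; intros x H.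
  - simpl in H. subst. apply path_const; [simpl; lra|apply dX_refl].
  - destruct H as [w [Ha Hw]]. rewrite S_INR, Rplus_comm.
    apply (path_concat _ (vtx w)); [|apply IH, Hw].
    pose proof (path_along_edge x w Ha 0 1 ltac:(lra) ltac:(lra)) as P.
    replace (Rabs (0 - 1)) with 1 in P by (rewrite Rabs_left1 by lra; ring).
    eapply path_congr; [apply P| |]; apply dX_le0.
    + eapply Rle_trans; [apply dX_edge_pt_u|]. rewrite clamp01_id; lra.
    + eapply Rle_trans; [apply dX_edge_pt_v|]. rewrite clamp01_id; lra.
Qed.

Lemma path_dcand_edge p q r : dcand_edge p q r -> path_of_length p q r.
Proof.
  intros HC. pose proof (dcand_edge_ge0 p q r HC) as Hr0.
  pose proof (pt_range p) as Rp. pose proof (pt_range q) as Rq.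
  destruct (pvalid cd p) as [[Ha _]|[Heq Ht]].
  - destruct HC as [[H1 [H2 ->]]|[H1 [H2 ->]]].
    + eapply path_congr; [apply (path_along_edge _ _ Ha (pt p) (pt q)); auto| |];
        apply dX_edge_pt_pt; auto.
    + eapply path_congr; [apply (path_along_edge _ _ Ha (pt p) (1 - pt q)); auto; lra| |].
      * apply dX_edge_pt_pt; auto.
      * apply dX_edge_pt_pt_rev; auto.
  - assert (Hq : pu q = pv q /\ pu p = pu q /\ pv p = pv q)
      by (destruct HC as [[H1 [H2 _]]|[H1 [H2 _]]]; repeat split; congruence).
    destruct Hq as [Hq1 [Hq2 Hq3]].
    assert (Htq : pt q = 0).
    { destruct (pvalid cd q) as [[Ha _]|[_ Ht']]; auto.
      rewrite Hq1 in Ha. exfalso; eapply adj_irrefl; eauto. }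
    apply path_const; auto. apply dX_le0.
    eapply Rle_trans; [apply dX_le; left; repeat split; eauto|].
    rewrite Ht, Htq, Rminus_0_r, Rabs_R0. lra.
Qed.

Lemma path_dcand p q r : dcand p q r -> path_of_length p q r.
Proof.
  intros H. apply dcand_iff in H. destruct H as [H|[x [y [ex [ey [Hx [Hy ->]]]]]]].
  - apply path_dcand_edge; auto.
  - destruct (dV_spec x y) as [n [Hn [Hd _]]]. rewrite Hd.
    apply (path_concat _ (vtx y)); [|apply path_rev, path_to_edge_end; auto].
    apply (path_concat _ (vtx x)); [apply path_to_edge_end; auto|apply path_walk; auto].
Qed.

(** * Geodesics and depth *)

Lemma geodesic_dist g a b s t :
  geodesic g a b -> a <= s <= b -> a <= t <= b -> dX (g s) (g t) = Rabs (s - t).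
Proof. intros [_ H]; auto. Qed.

Lemma geodesic_dist_ordered g a b s t :
  geodesic g a b -> a <= s <= t -> t <= b -> dX (g s) (g t) = t - s.
Proof.
  intros Hg Hst Htb. rewrite (geodesic_dist g a b s t Hg) by lra. rewrite Rabs_left1; lra.
Qed.

Lemma geodesic_rev g a b : geodesic g a b -> geodesic (fun s => g (a + b - s)) a b.
Proof.
  intros [Hab H]. split; auto. intros s t Hs Ht.
  rewrite H by lra. rewrite <- Rabs_Ropp. f_equal; ring.
Qed.

(* A 1-Lipschitz path whose length is the distance of its ends is a geodesic. *)
Lemma geodesic_exists p q :
  exists g, geodesic g 0 (dX p q) /\ g 0 = p /\ dX (g (dX p q)) q = 0.
Proof.
  set (D := dX p q).
  destruct (path_dcand p q D (proj1 (dX_spec p q))) as [g0 [HD [HL [H0 H1]]]].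
  set (g := fun s => if Req_EM_T s 0 then p else g0 s).
  assert (Hg : forall s, dX (g s) (g0 s) = 0).
  { intros s. unfold g. destruct (Req_EM_T s 0) as [->|]; [rewrite dX_sym; auto|apply dX_refl]. }
  assert (HgL : lipschitz1 g 0 D).
  { intros s t Hs Ht. rewrite (dX_zero_l _ _ _ (Hg s)), (dX_zero_r _ _ _ (Hg t)). auto. }
  assert (Hg0 : g 0 = p) by (unfold g; destruct Req_EM_T; congruence).
  assert (HgD : dX (g D) q = 0) by (rewrite (dX_zero_l _ _ _ (Hg D)); auto).
  assert (Hge : forall s t, 0 <= s <= t -> t <= D -> t - s <= dX (g s) (g t)).
  { intros s t Hst HtD.
    pose proof (dX_tri p (g s) q) as T1. fold D in T1. pose proof (dX_tri (g s) (g t) q).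
    pose proof (dX_tri (g t) (g D) q).
    pose proof (HgL 0 s ltac:(lra) ltac:(lra)) as E1. rewrite Hg0 in E1.
    pose proof (HgL t D ltac:(lra) ltac:(lra)) as E2.
    rewrite Rabs_left1 in E1, E2 by lra. lra. }
  exists g. split; [split; [exact HD|]|split; auto].
  intros s t Hs Ht. apply Rle_antisym; [apply HgL; auto|].
  destruct (Rle_dec s t).
  - rewrite Rabs_left1 by lra. pose proof (Hge s t ltac:(lra) ltac:(lra)). lra.
  - rewrite Rabs_right, dX_sym by lra. pose proof (Hge t s ltac:(lra) ltac:(lra)). lra.
Qed.

Lemma depthV_edge p : Rabs (depthV (pu p) - depthV (pv p)) <= 1.
Proof.
  destruct (pvalid cd p) as [[Ha _]|[Heq _]]; [apply depthV_adj; auto|].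
  rewrite Heq, Rminus_diag, Rabs_R0. lra.
Qed.

Lemma depth_edge_end p x ex : edge_end p x ex -> Rabs (depth p - depthV x) <= ex.
Proof.
  intros Hx. pose proof (depthV_edge p). pose proof (pt_range p).
  unfold Defs.depth. destruct Hx as [[-> ->]|[-> ->]].
  - replace ((1 - pt p) * depthV (pu p) + pt p * depthV (pv p) - depthV (pu p))
      with (pt p * (- (depthV (pu p) - depthV (pv p)))) by ring.
    apply Rabs_mult_le_1; [rewrite Rabs_right; lra|rewrite Rabs_Ropp; auto].
  - replace ((1 - pt p) * depthV (pu p) + pt p * depthV (pv p) - depthV (pv p))
      with ((1 - pt p) * (depthV (pu p) - depthV (pv p))) by ring.
    apply Rabs_mult_le_1; [rewrite Rabs_right; lra|auto].
Qed.

Lemma depth_lip p q : Rabs (depth p - depth q) <= dX p q.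
Proof.
  destruct (dX_spec p q) as [H _]. set (r := dX p q) in *. clearbody r.
  apply dcand_iff in H. destruct H as [H|[x [y [ex [ey [Hx [Hy ->]]]]]]].
  - pose proof (depthV_edge p). unfold Defs.depth.
    destruct H as [[H1 [H2 ->]]|[H1 [H2 ->]]]; rewrite <- ?H1, <- ?H2.
    + replace ((1 - pt p) * depthV (pu p) + pt p * depthV (pv p)
               - ((1 - pt q) * depthV (pu p) + pt q * depthV (pv p)))
        with ((pt p - pt q) * (- (depthV (pu p) - depthV (pv p)))) by ring.
      apply Rabs_mult_le_1; [lra|rewrite Rabs_Ropp; auto].
    + replace ((1 - pt p) * depthV (pu p) + pt p * depthV (pv p)
               - ((1 - pt q) * depthV (pv p) + pt q * depthV (pu p)))
        with ((pt p - (1 - pt q)) * (- (depthV (pu p) - depthV (pv p)))) by ring.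
      apply Rabs_mult_le_1; [lra|rewrite Rabs_Ropp; auto].
  - pose proof (depth_edge_end _ _ _ Hx) as Ex. pose proof (depth_edge_end _ _ _ Hy) as Ey.
    pose proof (depthV_lip x y). pose proof (depthV_lip y x). rewrite (dV_sym y x) in *.
    apply Rabs_le_between in Ex, Ey. apply Rabs_le. lra.
Qed.

Lemma depth_ge_sub_dX p q : depth p - dX p q <= depth q.
Proof. pose proof (depth_lip p q) as H. apply Rabs_le_between in H. lra. Qed.

Lemma depth_dX0 p q : dX p q = 0 -> depth p = depth q.
Proof.
  intros H. pose proof (depth_lip p q) as H'. rewrite H in H'. apply Rabs_le_between in H'. lra.
Qed.

Lemma depth_vtx v : depth (vtx v) = depthV v.
Proof. unfold Defs.depth. simpl. ring. Qed.

Lemma depth_edge_pt u v Huv s : 0 <= s <= 1 ->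
  depth (edge_pt u v Huv s) = (1 - s) * depthV u + s * depthV v.
Proof. intros Hs. unfold Defs.depth. simpl. rewrite clamp01_id; auto. Qed.

Lemma depth_ge0 p : 0 <= depth p.
Proof.
  unfold Defs.depth. pose proof (pt_range p).
  pose proof (depthV_ge0 (pu p)). pose proof (depthV_ge0 (pv p)). nra.
Qed.

(** * Connected components and horoballs *)

Definition image_on (g : R -> Pt) (a b : R) : Pt -> Prop :=
  fun p => exists t, a <= t <= b /\ p = g t.

(* The supremum of the times up to which [g] stays in [U] can lie neither in [U] nor in [V]. *)
Lemma lipschitz_image_separated (g : R -> Pt) a b (U V : Pt -> Prop) s0 t0 :
  lipschitz1 g a b -> Xopen U -> Xopen V ->
  (forall p, image_on g a b p -> U p \/ V p) ->
  (forall p, image_on g a b p -> U p -> V p -> False) ->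
  a <= s0 <= t0 -> t0 <= b -> U (g s0) -> V (g t0) -> False.
Proof.
  intros HL HU HV Hcov Hdis Hs0 Ht0 Us Vt.
  set (E := fun x => s0 <= x <= t0 /\ forall y, s0 <= y <= x -> U (g y)).
  assert (Es0 : E s0) by (split; [lra|]; intros y Hy; replace y with s0 by lra; auto).
  destruct (completeness E) as [m Hm]; [exists t0; intros x [Hx _]; lra|exists s0; exact Es0|].
  assert (Hm1 : s0 <= m) by (apply (proj1 Hm); exact Es0).
  assert (Hm2 : m <= t0) by (apply (proj2 Hm); intros x [Hx _]; lra).
  assert (HA : forall y, s0 <= y < m -> U (g y)).
  { intros y Hy. destruct (lub_approx E m y Hm (proj2 Hy)) as [x [[_ Hx] Hxy]]. apply Hx; lra. }
  assert (Himg : forall t, s0 <= t <= t0 -> image_on g a b (g t))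
    by (intros t Ht; exists t; split; [lra|auto]).
  destruct (Hcov (g m) (Himg m ltac:(lra))) as [Um|Vm].
  - destruct (HU _ Um) as [eps [Heps Hball]].
    destruct (Req_dec m t0) as [->|Hne]; [apply (Hdis (g t0)); auto|].
    set (m' := Rmin t0 (m + eps / 2)).
    assert (Hm' : m < m' <= t0 /\ m' - m < eps) by (unfold m', Rmin; destruct Rle_dec; lra).
    enough (E m') by (pose proof (proj1 Hm m' H); lra).
    split; [lra|]. intros y Hy. destruct (Rlt_dec y m); [apply HA; lra|].
    apply Hball. eapply Rle_lt_trans; [apply HL; lra|]. rewrite Rabs_left1; lra.
  - destruct (HV _ Vm) as [eps [Heps Hball]].
    destruct (Req_dec m s0) as [->|Hne]; [apply (Hdis (g s0)); auto|].
    set (y := Rmax s0 (m - eps / 2)).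
    assert (Hy : s0 <= y < m /\ m - y < eps) by (unfold y, Rmax; destruct Rle_dec; lra).
    apply (Hdis (g y)); [apply Himg; lra|apply HA; lra|].
    apply Hball. eapply Rle_lt_trans; [apply HL; lra|]. rewrite Rabs_right; lra.
Qed.

Lemma lipschitz_image_connected (g : R -> Pt) a b :
  lipschitz1 g a b -> Xconnected (image_on g a b).
Proof.
  intros HL [U [V [HU [HV [Hcov [[p [[s0 [Hs0 ->]] Up]] [[q [[t0 [Ht0 ->]] Vq]] Hdis]]]]]]].
  destruct (Rle_dec s0 t0).
  - eapply (lipschitz_image_separated g a b U V s0 t0); eauto; lra.
  - apply (lipschitz_image_separated g a b V U t0 s0); auto; try lra.
    + intros x Hx. destruct (Hcov x Hx); auto.
    + intros x Hx H1 H2. eapply Hdis; eauto.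
Qed.

Lemma geodesic_image_connected g a b : geodesic g a b -> Xconnected (image_on g a b).
Proof. intros [_ H]. apply lipschitz_image_connected. intros s t Hs Ht. rewrite H; auto; lra. Qed.

Lemma connected_union (A B : Pt -> Prop) :
  Xconnected A -> Xconnected B -> (exists p, A p /\ B p) -> Xconnected (fun p => A p \/ B p).
Proof.
  intros HA HB [c [Ac Bc]] [U [V [HU [HV [Hcov [[p [Hp Up]] [[q [Hq Vq]] Hdis]]]]]]].
  assert (Split : forall S : Pt -> Prop, Xconnected S -> (forall x, S x -> A x \/ B x) ->
            ~ ((exists x, S x /\ U x) /\ (exists x, S x /\ V x))).
  { intros S HS HSAB [H1 H2]. apply HS. exists U, V. repeat split; auto.
    all: intros x Hx; first [apply Hcov; auto | apply Hdis; auto]. }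
  pose proof (Split A HA (fun x Hx => or_introl Hx)) as NA.
  pose proof (Split B HB (fun x Hx => or_intror Hx)) as NB.
  destruct (Hcov c (or_introl Ac)) as [Uc|Vc].
  - destruct Hq as [Aq|Bq]; [apply NA|apply NB]; split; eauto.
  - destruct Hp as [Ap|Bp]; [apply NA|apply NB]; split; eauto.
Qed.

Lemma connected_pair_dX0 p q : dX p q = 0 -> Xconnected (fun x => x = p \/ x = q).
Proof.
  intros Hpq [U [V [HU [HV [_ [[a [Ha Ua]] [[b [Hb Vb]] Hdis]]]]]]].
  assert (Hopen_pq : forall W : Pt -> Prop, Xopen W -> W q -> W p).
  { intros W HW HWq. destruct (HW _ HWq) as [eps [He Hball]].
    apply Hball. rewrite dX_sym, Hpq. lra. }
  apply (Hdis p); [left; auto|..].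
  - destruct Ha as [->| ->]; [exact Ua|exact (Hopen_pq U HU Ua)].
  - destruct Hb as [->| ->]; [exact Vb|exact (Hopen_pq V HV Vb)].
Qed.

Lemma component_absorbs (A C S : Pt -> Prop) :
  component A C -> Xconnected S -> (forall x, S x -> A x) ->
  (exists p, C p /\ S p) -> forall x, S x -> C x.
Proof.
  intros [HCA [_ [HCc HCmax]]] HS HSA [p [Cp Sp]] x Hx.
  apply (HCmax (fun p => C p \/ S p)); auto.
  - intros y [Hy|Hy]; auto.
  - apply connected_union; eauto.
Qed.

Lemma component_dX0 (A C : Pt -> Prop) p q : component A C -> C p -> dX p q = 0 -> A q -> C q.
Proof.
  intros Hc Cp Hpq Aq. apply (component_absorbs A C (fun x => x = p \/ x = q)); auto.
  - apply connected_pair_dX0; auto.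
  - intros x [ -> | -> ]; auto. apply Hc, Cp.
  - exists p; auto.
Qed.

Lemma component_absorbs_geodesic (A C : Pt -> Prop) g D q :
  component A C -> geodesic g 0 D -> C (g 0) -> (forall s, 0 <= s <= D -> A (g s)) ->
  dX (g D) q = 0 -> A q -> C q.
Proof.
  intros Hc Hg C0 HA HD Aq. pose proof (proj1 Hg).
  apply (component_dX0 A C (g D)); auto.
  apply (component_absorbs A C (image_on g 0 D) Hc).
  - apply geodesic_image_connected, Hg.
  - intros x [s [Hs ->]]. auto.
  - exists (g 0). split; [auto|exists 0; split; [lra|auto]].
  - exists D. split; [lra|auto].
Qed.

Lemma dX_small_near_vertex p q x : edge_end p x 0 -> dX p q < 1/2 ->
  (pu q = x /\ pt q < 1/2) \/ (pv q = x /\ pt q > 1/2).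
Proof.
  intros Hx Hd. destruct (dX_spec p q) as [H _]. set (r := dX p q) in *. clearbody r.
  pose proof (pt_range p) as Rp. pose proof (pt_range q) as Rq.
  apply dcand_iff in H. destruct H as [H|[x' [y [ex [ey [Hx' [Hy ->]]]]]]].
  - destruct H as [[H1 [H2 ->]]|[H1 [H2 ->]]]; apply Rabs_def2 in Hd;
      destruct Hx as [[-> E]|[-> E]].
    + left; split; [congruence|lra].
    + right; split; [congruence|lra].
    + right; split; [congruence|lra].
    + left; split; [congruence|lra].
  - pose proof (edge_end_range _ _ _ Hx'). pose proof (edge_end_range _ _ _ Hy).
    pose proof (dV_ge0 x' y).
    assert (x' = y) by (apply dV_lt1; lra). subst y.
    assert (x' = x) by (destruct Hx as [[-> E]|[-> E]]; destruct Hx' as [[-> E']|[-> E']]; auto; lra).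
    subst x'. destruct Hy as [[-> E]|[-> E]]; [left|right]; split; auto; lra.
Qed.

Lemma dX_small_same_edge p q : 0 < pt p < 1 -> dX p q < Rmin (pt p) (1 - pt p) ->
  ((pu q = pu p /\ pv q = pv p) \/ (pu q = pv p /\ pv q = pu p)) /\ 0 < pt q < 1.
Proof.
  intros Hp Hd. destruct (dX_spec p q) as [H _]. set (r := dX p q) in *. clearbody r.
  pose proof (pt_range q) as Rq. pose proof (Rmin_l (pt p) (1 - pt p)) as M1.
  pose proof (Rmin_r (pt p) (1 - pt p)) as M2.
  apply dcand_iff in H. destruct H as [H|[x' [y [ex [ey [Hx' [Hy ->]]]]]]].
  - destruct H as [[H1 [H2 ->]]|[H1 [H2 ->]]]; apply Rabs_def2 in Hd;
      split; [left|lra|right|lra]; auto.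
  - pose proof (edge_end_range _ _ _ Hy). pose proof (dV_ge0 x' y). exfalso.
    destruct Hx' as [[_ ->]|[_ ->]]; lra.
Qed.

(* Full subgraphs are closed: a point at distance [< 1/2] of a vertex, or close to
   the interior point of an edge, sits on the same edge. *)
Lemma fullsub_closed (W : Vtx -> Prop) p :
  (forall eps, 0 < eps -> exists q, fullsub W q /\ dX p q < eps) -> fullsub W p.
Proof.
  intros Hcl. pose proof (pt_range p). unfold fullsub.
  destruct (Req_dec (pt p) 0) as [E0|N0]; [|destruct (Req_dec (pt p) 1) as [E1|N1]].
  - left. split; auto. destruct (Hcl (1/2) ltac:(lra)) as [q [Hq Hd]].
    destruct (dX_small_near_vertex p q (pu p) (or_introl (conj eq_refl (eq_sym E0))) Hd)
      as [[E Hl]|[E Hl]]; rewrite <- E;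
      destruct Hq as [[Ht Hw]|[[Ht Hw]|[Hw1 Hw2]]]; auto; lra.
  - right; left. split; auto. destruct (Hcl (1/2) ltac:(lra)) as [q [Hq Hd]].
    assert (Hx : edge_end p (pv p) 0) by (right; split; auto; lra).
    destruct (dX_small_near_vertex p q (pv p) Hx Hd)
      as [[E Hl]|[E Hl]]; rewrite <- E;
      destruct Hq as [[Ht Hw]|[[Ht Hw]|[Hw1 Hw2]]]; auto; lra.
  - right; right.
    destruct (Hcl (Rmin (pt p) (1 - pt p)) ltac:(apply Rmin_glb_lt; lra)) as [q [Hq Hd]].
    destruct (dX_small_same_edge p q ltac:(lra) Hd) as [Ho Ht].
    destruct Hq as [[Ht' _]|[[Ht' _]|[Hw1 Hw2]]]; try lra.
    destruct Ho as [[Eu Ev]|[Eu Ev]]; rewrite <- Eu, <- Ev; auto.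
Qed.

Definition positive_depth (p : Pt) : Prop := 0 < depth p.

Lemma edge_pt_depth_pos u v Huv s : 0 <= s < 1 -> 0 < depthV u -> 0 < depth (edge_pt u v Huv s).
Proof.
  intros Hs Hu. rewrite depth_edge_pt by lra. pose proof (depthV_ge0 v).
  assert (0 < (1 - s) * depthV u) by (apply Rmult_lt_0_compat; lra). nra.
Qed.

Section Component.
Variable C : Pt -> Prop.
Hypothesis hC : component positive_depth C.

Definition closure_vertices (v : Vtx) : Prop := closure C (vtx v).

Lemma closure_dX0 q q' : closure C q -> dX q q' = 0 -> closure C q'.
Proof.
  intros Hq H eps Heps. destruct (Hq eps Heps) as [p [Cp Hp]]. exists p; split; auto.
  pose proof (dX_tri p q q'). lra.
Qed.

Lemma closure_self p : C p -> closure C p.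
Proof. intros Cp eps He. exists p. split; auto. rewrite dX_refl. auto. Qed.

Lemma edge_segment_in_component u v Huv a b s0 :
  a <= s0 <= b -> C (edge_pt u v Huv s0) ->
  (forall r, a <= r <= b -> 0 < depth (edge_pt u v Huv r)) ->
  forall r, a <= r <= b -> C (edge_pt u v Huv r).
Proof.
  intros Hs0 C0 Hpos r Hr.
  apply (component_absorbs positive_depth C (image_on (edge_pt u v Huv) a b) hC).
  - apply lipschitz_image_connected. intros s t _ _. apply dX_edge_pt.
  - intros x [t [Ht ->]]. apply Hpos, Ht.
  - exists (edge_pt u v Huv s0). split; [auto|exists s0; auto].
  - exists r; auto.
Qed.

Lemma closure_vertex_in_component v : closure C (vtx v) -> 0 < depthV v -> C (vtx v).
Proof.
  intros Hcl Hd. destruct (Hcl _ Hd) as [p [Cp Hp]].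
  destruct (geodesic_exists p (vtx v)) as [g [Hg [Hg0 HgD]]].
  set (D := dX p (vtx v)) in *. pose proof (proj1 Hg) as HD.
  apply (component_absorbs_geodesic positive_depth C g D); auto.
  - rewrite Hg0. auto.
  - intros s Hs. unfold positive_depth.
    pose proof (depth_ge_sub_dX (vtx v) (g s)) as Hdep. rewrite depth_vtx in Hdep.
    pose proof (dX_tri (vtx v) (g D) (g s)) as Htri.
    rewrite (dX_sym (vtx v) (g D)), HgD, (geodesic_dist g 0 D D s Hg) in Htri by lra.
    rewrite Rabs_right in Htri by lra. lra.
  - unfold positive_depth. rewrite depth_vtx; auto.
Qed.

Lemma open_edge_in_closure_component q (Ha : adj (pu q) (pv q)) :
  0 < pt q < 1 -> closure C q -> forall r, 0 < r < 1 -> C (edge_pt (pu q) (pv q) Ha r).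
Proof.
  intros Hq Hcl r Hr.
  destruct (Hcl (Rmin (pt q) (1 - pt q)) ltac:(apply Rmin_glb_lt; lra)) as [p [Cp Hd]].
  rewrite dX_sym in Hd.
  destruct (dX_small_same_edge q p Hq Hd) as [Ho Hpt].
  assert (Hs0 : exists s0, 0 < s0 < 1 /\ dX p (edge_pt (pu q) (pv q) Ha s0) = 0).
  { destruct Ho as [[E1 E2]|[E1 E2]]; [exists (pt p)|exists (1 - pt p)];
      (split; [lra|rewrite dX_sym]).
    - apply dX_edge_pt_pt; auto.
    - apply dX_edge_pt_pt_rev; auto. }
  destruct Hs0 as [s0 [Hs0 Hps0]].
  assert (Hpos : forall r, 0 < r < 1 -> 0 < depth (edge_pt (pu q) (pv q) Ha r)).
  { intros r' Hr'. pose proof (depthV_ge0 (pu q)). pose proof (depthV_ge0 (pv q)).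
    pose proof (proj1 hC p Cp) as Hp. unfold positive_depth in Hp.
    rewrite (depth_dX0 _ _ Hps0), depth_edge_pt in Hp by lra.
    rewrite depth_edge_pt by lra. apply (convex_comb_pos _ _ s0); auto; lra. }
  apply (edge_segment_in_component _ _ Ha (Rmin s0 r) (Rmax s0 r) s0).
  - split; [apply Rmin_l|apply Rmax_l].
  - apply (component_dX0 positive_depth C p); auto; apply Hpos; lra.
  - intros r' Hr'. apply Hpos. unfold Rmin, Rmax in Hr'; destruct Rle_dec; lra.
  - split; [apply Rmin_r|apply Rmax_r].
Qed.

Lemma closure_fullsub q : closure C q -> fullsub closure_vertices q.
Proof.
  intros Hq. pose proof (pt_range q). unfold fullsub, closure_vertices.
  destruct (Req_dec (pt q) 0) as [E0|N0]; [|destruct (Req_dec (pt q) 1) as [E1|N1]].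
  - left. split; auto. apply (closure_dX0 q); auto.
    apply dX_le0, dX_vtx_edge_end. left; auto.
  - right; left. split; auto. apply (closure_dX0 q); auto.
    apply dX_le0. eapply Rle_trans; [apply dX_vtx_edge_end; right; split; reflexivity|]. lra.
  - right; right.
    assert (Ha : adj (pu q) (pv q)) by (destruct (pvalid cd q) as [[? _]|[_ ?]]; auto; lra).
    pose proof (open_edge_in_closure_component q Ha ltac:(lra) Hq) as Hall.
    split; intros eps He.
    + exists (edge_pt (pu q) (pv q) Ha (Rmin (eps / 2) (1/2))).
      assert (0 < Rmin (eps / 2) (1/2) <= eps / 2 /\ Rmin (eps / 2) (1/2) <= 1/2)
        by (unfold Rmin; destruct Rle_dec; lra).
      split; [apply Hall; lra|].
      eapply Rle_lt_trans; [apply dX_edge_pt_u|]. rewrite clamp01_id; lra.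
    + exists (edge_pt (pu q) (pv q) Ha (Rmax (1 - eps / 2) (1/2))).
      assert (1 - eps / 2 <= Rmax (1 - eps / 2) (1/2) < 1 /\ 1/2 <= Rmax (1 - eps / 2) (1/2))
        by (unfold Rmax; destruct Rle_dec; lra).
      split; [apply Hall; lra|].
      eapply Rle_lt_trans; [apply dX_edge_pt_v|]. rewrite clamp01_id; lra.
Qed.

Lemma vertex_end_in_component p x :
  edge_end p x 0 -> closure_vertices x -> 0 < depth p -> C p.
Proof.
  intros Hx Hw Hd.
  assert (Hz : dX (vtx x) p = 0) by (rewrite dX_sym; apply dX_le0, dX_vtx_edge_end, Hx).
  apply (component_dX0 positive_depth C (vtx x)); auto.
  apply closure_vertex_in_component; auto. rewrite <- depth_vtx, (depth_dX0 _ _ Hz). auto.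
Qed.

Lemma fullsub_deep_in_component p : fullsub closure_vertices p -> 0 < depth p -> C p.
Proof.
  intros Hf Hd. pose proof (pt_range p). unfold fullsub in Hf.
  destruct (Req_dec (pt p) 0) as [E0|N0]; [|destruct (Req_dec (pt p) 1) as [E1|N1]].
  - apply (vertex_end_in_component p (pu p)); [left; auto| |exact Hd].
    destruct Hf as [[_ ?]|[[? _]|[? _]]]; auto; lra.
  - apply (vertex_end_in_component p (pv p)); [right; split; auto; lra| |exact Hd].
    destruct Hf as [[? _]|[[_ ?]|[_ ?]]]; auto; lra.
  - destruct Hf as [[? _]|[[? _]|[Wu Wv]]]; try lra.
    assert (Ha : adj (pu p) (pv p)) by (destruct (pvalid cd p) as [[? _]|[_ ?]]; auto; lra).
    pose proof (depthV_ge0 (pu p)). pose proof (depthV_ge0 (pv p)).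
    assert (From_end : forall x y (Hxy : adj x y) s, 0 <= s < 1 -> closure_vertices x ->
              0 < depthV x -> dX (edge_pt x y Hxy s) p = 0 -> C p).
    { intros x y Hxy s Hs Hwx Hx Hz.
      apply (component_dX0 positive_depth C (edge_pt x y Hxy s)); auto.
      apply (edge_segment_in_component _ _ Hxy 0 s 0); try lra.
      - apply (component_dX0 positive_depth C (vtx x)); [exact hC|apply closure_vertex_in_component; auto| |].
        + apply dX_le0. rewrite dX_sym. eapply Rle_trans; [apply dX_edge_pt_u|].
          rewrite clamp01_id; lra.
        + apply edge_pt_depth_pos; auto; lra.
      - intros r Hr. apply edge_pt_depth_pos; auto; lra. }
    unfold Defs.depth in Hd. destruct (Rlt_dec 0 (depthV (pu p))).
    + apply (From_end _ _ Ha (pt p)); auto; [lra|apply dX_edge_pt_pt; auto].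
    + apply (From_end _ _ (adj_sym _ _ Ha) (1 - pt p)); [lra|auto|nra|].
      apply dX_edge_pt_pt_rev; auto.
Qed.

End Component.

Definition component_of (A : Pt -> Prop) (p0 : Pt) : Pt -> Prop :=
  fun p => exists S, Xconnected S /\ (forall x, S x -> A x) /\ S p0 /\ S p.

Lemma connected_singleton p0 : Xconnected (fun p => p = p0).
Proof.
  intros [U [V [_ [_ [_ [[a [-> Ua]] [[b [-> Vb]] Hdis]]]]]]]. apply (Hdis p0); auto.
Qed.

Lemma connected_open_side (S U V : Pt -> Prop) :
  Xconnected S -> Xopen U -> Xopen V -> (forall x, S x -> U x \/ V x) ->
  (forall x, S x -> U x -> V x -> False) -> forall x y, S x -> S y -> U x -> U y.
Proof.
  intros HS HU HV Hcov Hdis x y Sx Sy Ux. destruct (Hcov y Sy) as [Uy|Vy]; [exact Uy|].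
  exfalso. apply HS. exists U, V. repeat split; eauto.
Qed.

Lemma component_of_component A p0 : A p0 -> component A (component_of A p0).
Proof.
  intros Hp0.
  assert (Single : forall S, (forall x, S x -> A x) -> S p0 -> Xconnected S ->
            forall p, S p -> component_of A p0 p) by (intros S HSA HS0 HS p Sp; exists S; auto).
  assert (Self : component_of A p0 p0)
    by (exists (fun p => p = p0); repeat split; [apply connected_singleton|intros x ->; auto]).
  split; [|split; [exists p0; exact Self|split]].
  - intros p [S [_ [HS [_ Sp]]]]. auto.
  - intros [U [V [HU [HV [Hcov [[a [Ca Ua]] [[b [Cb Vb]] Hdis]]]]]]].
    assert (Side : forall (U V : Pt -> Prop), Xopen U -> Xopen V ->
              (forall x, component_of A p0 x -> U x \/ V x) ->
              (forall x, component_of A p0 x -> U x -> V x -> False) ->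
              U p0 -> forall x, component_of A p0 x -> U x).
    { intros U' V' HU' HV' Hcov' Hdis' U0 x Cx.
      pose proof Cx as [S [HS [HSA [S0 Sx]]]].
      apply (connected_open_side S U' V' HS HU' HV') with p0; auto.
      - intros y Sy. apply Hcov'. exact (Single S HSA S0 HS y Sy).
      - intros y Sy. apply Hdis'. exact (Single S HSA S0 HS y Sy). }
    destruct (Hcov p0 Self) as [U0|V0].
    + apply (Hdis b); auto. apply (Side U V); auto.
    + apply (Hdis a); auto. apply (Side V U); auto.
      * intros x Cx. destruct (Hcov x Cx); auto.
      * intros x Cx Vx Ux. eapply Hdis; eauto.
  - intros C' HC'1 HC'2 HC'3 p Hp. exists C'. repeat split; auto.
Qed.

Lemma horoball_of_component C :
  component positive_depth C -> is_horoball cd (fullsub (closure_vertices C)).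
Proof.
  intros hC. exists C. split; [exact hC|]. exists (closure_vertices C). split; [|split].
  - apply closure_fullsub; auto.
  - intros W' HW' v Hv. specialize (HW' (vtx v) Hv).
    unfold fullsub in HW'; simpl in HW'. destruct HW' as [[_ ?]|[[_ ?]|[? _]]]; auto.
  - intros p; tauto.
Qed.

Lemma horoball_spec H : is_horoball cd H ->
  exists C, component positive_depth C /\ (forall p, H p -> 0 < depth p -> C p) /\
    (forall q, closure C q -> H q) /\ exists W, forall p, H p <-> fullsub W p.
Proof.
  intros [C [hC [W [Hcl [Hmin HH]]]]].
  exists C. split; [exact hC|]. split; [|split; [|exists W; auto]].
  - intros p Hp Hd. apply (fullsub_deep_in_component C hC); auto.
    assert (Hsub : forall v, W v -> closure_vertices C v)
      by (apply Hmin; intros q Hq; apply closure_fullsub; auto).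
    apply HH in Hp. destruct Hp as [[? ?]|[[? ?]|[? ?]]]; [left|right; left|right; right]; auto.
  - intros q Hq. apply HH, Hcl, Hq.
Qed.

Lemma khoroball_sub_horoball k H : (1 <= k)%nat -> is_khoroball cd k H ->
  exists H', is_horoball cd H' /\ forall p, H p -> H' p.
Proof.
  intros Hk [HA [[p0 Hp0] [Hconn Hmax]]].
  assert (Hpos : forall p, H p -> 0 < depth p).
  { intros p Hp. specialize (HA p Hp). apply le_INR in Hk. simpl in *. lra. }
  set (C := component_of positive_depth p0).
  assert (hC : component positive_depth C) by (apply component_of_component, Hpos, Hp0).
  exists (fullsub (closure_vertices C)). split; [apply horoball_of_component, hC|].
  intros p Hp. apply closure_fullsub; auto. apply closure_self.
  exists H. repeat split; auto.
Qed.

Lemma geodesic_depth_lip g a b : geodesic g a b ->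
  forall s t, a <= s <= b -> a <= t <= b -> Rabs (depth (g s) - depth (g t)) <= Rabs (s - t).
Proof. intros Hg s t Hs Ht. rewrite <- (geodesic_dist g a b s t Hg Hs Ht). apply depth_lip. Qed.

Lemma horoball_closed_along_geodesic H g a b : is_horoball cd H -> geodesic g a b ->
  forall x, a <= x <= b ->
  (forall eps, 0 < eps -> exists y, a <= y <= b /\ Rabs (x - y) < eps /\ H (g y)) -> H (g x).
Proof.
  intros HH Hg x Hx Hnear. destruct (horoball_spec H HH) as [C [_ [_ [_ [W HW]]]]].
  apply HW, fullsub_closed. intros eps He. destruct (Hnear eps He) as [y [Hy [Hxy Hgy]]].
  exists (g y). split; [apply HW, Hgy|]. rewrite (geodesic_dist g a b); auto.
Qed.

Lemma regular_geodesic_depth_tent g a b H c d K :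
  regular_geodesic cd g a b -> is_horoball cd H ->
  a <= c -> c <= d -> d <= b -> 3 <= d - c -> (forall t, c <= t <= d -> H (g t)) ->
  K <= depth (g c) -> K <= depth (g d) ->
  forall t m, c <= t <= d -> m <= t - c -> m <= d - t -> m <= (d - c - 3) / 2 ->
    K + m <= depth (g t).
Proof.
  intros [Hg Hreg] HH Hac Hcd Hdb H3 Hin Kc Kd t m Ht M1 M2 M3.
  pose proof (horoball_closed_along_geodesic H g a b HH Hg) as Hclosed.
  destruct (maximal_subinterval (fun t => H (g t)) a b c d) as [cs [ds [Hcs [Hds [Hcsds Hmax]]]]];
    auto.
  - intros x y Hx Hy HP. apply Hclosed; [lra|]. intros eps He.
    exists (Rmin (x + eps / 2) y).
    assert (x < Rmin (x + eps / 2) y <= y /\ Rmin (x + eps / 2) y - x < eps)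
      by (unfold Rmin; destruct Rle_dec; lra).
    split; [lra|split; [rewrite Rabs_left1; lra|apply HP; lra]].
  - intros x y Hx Hy HP. apply Hclosed; [lra|]. intros eps He.
    exists (Rmax (x - eps / 2) y).
    assert (y <= Rmax (x - eps / 2) y < x /\ x - Rmax (x - eps / 2) y < eps)
      by (unfold Rmax; destruct Rle_dec; lra).
    split; [lra|split; [rewrite Rabs_right; lra|apply HP; lra]].
  - destruct (Hreg H HH cs ds ltac:(lra) ltac:(lra) Hcsds Hmax)
      as [A [B [HAB [HBd [HBA [D1 [D2 D3]]]]]]].
    apply (tent_lower_bound (fun s => depth (g s)) cs ds A B c d); auto; try lra.
    intros s s' Hs Hs'. apply (geodesic_depth_lip g a b); auto; lra.
Qed.

(** * Stability of long horoball segments *)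

Lemma slim_triangle_far_from_short_side dl g1 a1 b1 g2 a2 b2 g3 D :
  hyperbolic cd dl -> geodesic g1 a1 b1 -> geodesic g2 a2 b2 -> geodesic g3 0 D ->
  dX (g1 b1) (g2 a2) = 0 -> dX (g2 b2) (g3 0) = 0 -> dX (g3 D) (g1 a1) = 0 ->
  forall s, a1 <= s <= b1 -> D + dl < s - a1 ->
  exists t, a2 <= t <= b2 /\ dX (g1 s) (g2 t) <= dl.
Proof.
  intros Hhyp G1 G2 G3 E12 E23 E31 s Hs Hfar.
  destruct (Hhyp g1 g2 g3 a1 b1 a2 b2 0 D G1 G2 G3 E12 E23 E31 s Hs)
    as [t [[Ht Hd]|[Ht Hd]]]; [exists t; auto|exfalso].
  pose proof (proj1 G1).
  pose proof (dX_tri (g1 s) (g3 t) (g1 a1)). pose proof (dX_tri (g3 t) (g3 D) (g1 a1)).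
  rewrite (geodesic_dist g1 a1 b1 s a1), Rabs_right in * by (auto; lra).
  rewrite (geodesic_dist g3 0 D t D), Rabs_left1 in * by (auto; lra). lra.
Qed.

(* Two slim triangles share the diagonal from [tau2 e2] to [tau1 s1]: a point of [tau2]
   far from both short sides is [dl]-close to the diagonal, which is [dl]-close to [tau1]. *)
Lemma quadrilateral_fellow_traveller dl tau1 tau2 s1 e1 s2 e2 L :
  hyperbolic cd dl -> geodesic tau1 s1 e1 -> geodesic tau2 s2 e2 ->
  dX (tau1 s1) (tau2 s2) <= L -> dX (tau1 e1) (tau2 e2) <= L ->
  forall u, s2 <= u <= e2 -> L + dl < u - s2 -> L + 2 * dl < e2 - u ->
  exists t, s1 <= t <= e1 /\ dX (tau1 t) (tau2 u) <= 2 * dl.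
Proof.
  intros Hhyp G1 G2 HL1 HL2 u Hu Hu1 Hu2.
  destruct (geodesic_exists (tau1 s1) (tau2 s2)) as [al [Ga [Ha0 HaD]]].
  destruct (geodesic_exists (tau1 e1) (tau2 e2)) as [be [Gb [Hb0 HbD]]].
  destruct (geodesic_exists (tau1 s1) (tau2 e2)) as [ga [Gg [Hg0 HgD]]].
  set (Dg := dX (tau1 s1) (tau2 e2)) in *.
  pose proof (geodesic_rev ga 0 Dg Gg) as Gg'. set (diag := fun s => ga (0 + Dg - s)) in Gg'.
  assert (Hdiag0 : dX (tau2 e2) (diag 0) = 0)
    by (unfold diag; rewrite dX_sym; replace (0 + Dg - 0) with Dg by ring; exact HgD).
  assert (HdiagD : diag Dg = tau1 s1) by (unfold diag; rewrite <- Hg0; f_equal; ring).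
  pose proof (proj1 G2).
  destruct (slim_triangle_far_from_short_side dl tau2 s2 e2 diag 0 Dg al _ Hhyp G2 Gg' Ga
              Hdiag0 ltac:(rewrite HdiagD, Ha0; apply dX_refl) HaD u Hu ltac:(lra))
    as [r [Hr Hdr]].
  assert (Hfar : L + dl < r - 0).
  { pose proof (dX_tri (tau2 u) (diag r) (diag 0)). pose proof (dX_tri (tau2 u) (diag 0) (tau2 e2)).
    rewrite (geodesic_dist diag 0 Dg r 0), Rabs_right in * by (auto; lra).
    rewrite (dX_sym (diag 0)), Hdiag0 in *.
    rewrite (geodesic_dist tau2 s2 e2 u e2), Rabs_left1 in * by (auto; lra). lra. }
  assert (Hclose : dX (be (dX (tau1 e1) (tau2 e2))) (diag 0) = 0).
  { apply dX_le0. pose proof (dX_tri (be (dX (tau1 e1) (tau2 e2))) (tau2 e2) (diag 0)). lra. }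
  destruct (slim_triangle_far_from_short_side dl diag 0 Dg tau1 s1 e1 be _ Hhyp Gg' G1 Gb
              ltac:(rewrite HdiagD; apply dX_refl) ltac:(rewrite Hb0; apply dX_refl) Hclose
              r Hr ltac:(lra))
    as [t [Ht Hdt]].
  exists t. split; [exact Ht|].
  pose proof (dX_tri (tau1 t) (diag r) (tau2 u)). rewrite (dX_sym (tau1 t)), (dX_sym (diag r)) in *.
  lra.
Qed.

Lemma geodesic_length_le g1 a1 b1 g2 a2 b2 : geodesic g1 a1 b1 -> geodesic g2 a2 b2 ->
  b1 - a1 <= b2 - a2 + dX (g1 a1) (g2 a2) + dX (g1 b1) (g2 b2).
Proof.
  intros G1 G2. pose proof (proj1 G1). pose proof (proj1 G2).
  pose proof (dX_tri (g1 a1) (g2 a2) (g1 b1)). pose proof (dX_tri (g2 a2) (g2 b2) (g1 b1)).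
  rewrite (geodesic_dist g1 a1 b1 a1 b1), (geodesic_dist g2 a2 b2 a2 b2), !Rabs_left1 in *
    by (auto; lra).
  rewrite (dX_sym (g2 b2)) in *. lra.
Qed.

Lemma contains_segment_mono g a b H T T' :
  T' <= T -> contains_segment cd g a b H T -> contains_segment cd g a b H T'.
Proof. intros HT [c [d [Hc [Hd [HTdc Hin]]]]]. exists c, d. repeat split; auto; lra. Qed.

Section Stability.
Variables (dl : R) (tau1 tau2 : R -> Pt) (s1 e1 s2 e2 L c d : R).
Hypothesis dl_ge1 : 1 <= dl.
Hypothesis hyp : hyperbolic cd dl.
Hypothesis reg1 : regular_geodesic cd tau1 s1 e1.
Hypothesis geo2 : geodesic tau2 s2 e2.
Hypothesis close_s : dX (tau1 s1) (tau2 s2) <= L.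
Hypothesis close_e : dX (tau1 e1) (tau2 e2) <= L.
Hypothesis s1_le_c : s1 <= c.
Hypothesis d_le_e1 : d <= e1.
Hypothesis long_segment : 4 * L + 8 * dl + 3 <= d - c.

(* The part of [tau2] facing the segment [c, d] of [tau1], shrunk by [L + 4 dl] at both ends. *)
Let u1 := s2 + (c - s1) + (L + 4 * dl).
Let u2 := e2 - (e1 - d) - (L + 4 * dl).

Let L_ge0 : 0 <= L.
Proof. pose proof (dX_ge0 (tau1 s1) (tau2 s2)). lra. Qed.

Lemma facing_window : s2 <= u1 /\ u2 <= e2 /\ d - c - (4 * L + 8 * dl) <= u2 - u1.
Proof.
  pose proof L_ge0. pose proof (geodesic_length_le tau1 s1 e1 tau2 s2 e2 (proj1 reg1) geo2).
  unfold u1, u2. lra.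
Qed.

Lemma matched_point_inside u : u1 <= u <= u2 ->
  exists t, c + 2 * dl + (u - u1) <= t <= d - 2 * dl - (u2 - u) /\
    dX (tau1 t) (tau2 u) <= 2 * dl.
Proof.
  intros Hu. pose proof L_ge0. pose proof facing_window. pose proof (proj1 reg1) as G1.
  pose proof (proj1 G1). pose proof (proj1 geo2).
  destruct (quadrilateral_fellow_traveller dl tau1 tau2 s1 e1 s2 e2 L hyp G1 geo2 close_s close_e u)
    as [t [Ht Hdt]]; try (unfold u1, u2 in *; lra).
  exists t. split; [|exact Hdt].
  pose proof (dX_tri (tau2 s2) (tau1 s1) (tau2 u)). pose proof (dX_tri (tau1 s1) (tau1 t) (tau2 u)).
  pose proof (dX_tri (tau2 u) (tau1 t) (tau2 e2)). pose proof (dX_tri (tau1 t) (tau1 e1) (tau2 e2)).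
  rewrite (dX_sym (tau2 s2) (tau1 s1)), (dX_sym (tau2 u) (tau1 t)) in *.
  unfold u1, u2 in *.
  rewrite (geodesic_dist_ordered tau1 s1 e1 s1 t), (geodesic_dist_ordered tau1 s1 e1 t e1),
    (geodesic_dist_ordered tau2 s2 e2 s2 u), (geodesic_dist_ordered tau2 s2 e2 u e2) in *
    by (auto; lra).
  lra.
Qed.

(* The tent profile makes [tau1 t] deeper than the floor [K] by [2 dl + m]; the geodesic
   to [tau2 u] has length at most [2 dl]. *)
Lemma deep_geodesic_to_tau2 H K : is_horoball cd H -> (forall t, c <= t <= d -> H (tau1 t)) ->
  K <= depth (tau1 c) -> K <= depth (tau1 d) ->
  forall u m, u1 <= u <= u2 -> 0 <= m -> m <= u - u1 -> m <= u2 - u -> m <= 1 ->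
  exists t g D, c <= t <= d /\ geodesic g 0 D /\ g 0 = tau1 t /\ dX (g D) (tau2 u) = 0 /\
    forall s, 0 <= s <= D -> K + m <= depth (g s).
Proof.
  intros HH Hin Kc Kd u m Hu M0 M1 M2 M3. pose proof L_ge0.
  destruct (matched_point_inside u Hu) as [t [Ht Hdt]].
  assert (Hdeep : K + (2 * dl + m) <= depth (tau1 t))
    by (apply (regular_geodesic_depth_tent tau1 s1 e1 H c d K); auto; unfold u1, u2 in *; lra).
  destruct (geodesic_exists (tau1 t) (tau2 u)) as [g [Hg [Hg0 HgD]]].
  exists t, g, (dX (tau1 t) (tau2 u)). split; [lra|split; [exact Hg|split; [exact Hg0|split; [exact HgD|]]]].
  intros s Hs. pose proof (depth_ge_sub_dX (tau1 t) (g s)).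
  rewrite <- Hg0, (geodesic_dist g 0 _ 0 s Hg), Rabs_left1 in * by lra. lra.
Qed.

Lemma horoball_case H : is_horoball cd H -> (forall t, c <= t <= d -> H (tau1 t)) ->
  forall u, u1 <= u <= u2 -> H (tau2 u).
Proof.
  intros HH Hin. pose proof facing_window.
  destruct (horoball_spec H HH) as [C [hC [Hdeep [Hclosure _]]]].
  assert (Inner : forall u, u1 < u < u2 -> C (tau2 u)).
  { intros u Hu. set (m := Rmin (u - u1) (Rmin (u2 - u) 1)).
    assert (Hm : 0 < m /\ m <= u - u1 /\ m <= u2 - u /\ m <= 1).
    { unfold m, Rmin. repeat destruct Rle_dec; lra. }
    destruct (deep_geodesic_to_tau2 H 0 HH Hin (depth_ge0 _) (depth_ge0 _) u m)
      as [t [g [D [Ht [Hg [Hg0 [HgD Hdeep_g]]]]]]]; try lra.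
    pose proof (proj1 Hg).
    apply (component_absorbs_geodesic positive_depth C g D); auto.
    - rewrite Hg0. apply Hdeep; [apply Hin, Ht|]. rewrite <- Hg0. pose proof (Hdeep_g 0). lra.
    - intros s Hs. unfold positive_depth. pose proof (Hdeep_g s Hs). lra.
    - unfold positive_depth. rewrite <- (depth_dX0 _ _ HgD). pose proof (Hdeep_g D). lra. }
  intros u Hu. apply Hclosure. intros eps He.
  set (h := Rmin (eps / 2) 1).
  assert (Hh : 0 < h <= 1 /\ h < eps) by (unfold h, Rmin; destruct Rle_dec; lra).
  assert (Hwin : s2 <= u1 /\ u2 <= e2) by lra.
  destruct (Rle_dec u ((u1 + u2) / 2)).
  - exists (tau2 (u + h)). split; [apply Inner; lra|].
    rewrite dX_sym, (geodesic_dist_ordered tau2 s2 e2) by (auto; lra). lra.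
  - exists (tau2 (u - h)). split; [apply Inner; lra|].
    rewrite (geodesic_dist_ordered tau2 s2 e2) by (auto; lra). lra.
Qed.

Lemma khoroball_case k H : (1 <= k)%nat -> is_khoroball cd k H ->
  (forall t, c <= t <= d -> H (tau1 t)) -> forall u, u1 <= u <= u2 -> H (tau2 u).
Proof.
  intros Hk HH Hin u Hu. pose proof facing_window. pose proof L_ge0.
  destruct (khoroball_sub_horoball k H Hk HH) as [H' [HH' Hsub]].
  assert (Hk_depth : forall p, H p -> INR k <= depth p) by apply HH.
  destruct (deep_geodesic_to_tau2 H' (INR k) HH' (fun t Ht => Hsub _ (Hin t Ht))
              (Hk_depth _ (Hin c ltac:(lra))) (Hk_depth _ (Hin d ltac:(lra))) u 0)
    as [t [g [D [Ht [Hg [Hg0 [HgD Hdeep_g]]]]]]]; try lra.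
  pose proof (proj1 Hg).
  apply (component_absorbs_geodesic (fun p => INR k <= depth p) H g D); auto.
  - rewrite Hg0. apply Hin, Ht.
  - intros s Hs. pose proof (Hdeep_g s Hs). lra.
  - rewrite <- (depth_dX0 _ _ HgD). pose proof (Hdeep_g D). lra.
Qed.

Lemma stable_segment H :
  (is_horoball cd H \/ exists k : nat, (1 <= k)%nat /\ is_khoroball cd k H) ->
  (forall t, c <= t <= d -> H (tau1 t)) ->
  contains_segment cd tau2 s2 e2 H (d - c - (4 * L + 8 * dl)).
Proof.
  intros HH Hin. pose proof facing_window.
  exists u1, u2. split; [lra|split; [lra|split; [lra|]]].
  destruct HH as [HH|[k [Hk HH]]]; [apply horoball_case|apply (khoroball_case k)]; auto.
Qed.

End Stability.

End CuspedSpace.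

Theorem mainTheorem5 :
  forall (cd : CuspData), StandingAssumptions cd ->
  forall delta : nat, (1 <= delta)%nat -> hyperbolic cd (INR delta) ->
  forall (H : Pt cd -> Prop),
    (is_horoball cd H \/ exists k : nat, (1 <= k)%nat /\ is_khoroball cd k H) ->
  forall (tau1 tau2 : R -> Pt cd) (s1 e1 s2 e2 L T : R),
    regular_geodesic cd tau1 s1 e1 -> regular_geodesic cd tau2 s2 e2 ->
    dX cd (tau1 s1) (tau2 s2) <= L -> dX cd (tau1 e1) (tau2 e2) <= L ->
    4 * L + 8 * INR delta + 3 <= T ->
    contains_segment cd tau1 s1 e1 H T ->
    contains_segment cd tau2 s2 e2 H (T - (4 * L + 8 * INR delta)).
Proof.
  intros cd hSA delta Hdelta Hhyp H HH tau1 tau2 s1 e1 s2 e2 L T Hreg1 [Hgeo2 _] HL1 HL2 HT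
    [c [d [[Hs1c Hcd] [Hde1 [HTdc Hin]]]]].
  apply (contains_segment_mono cd _ _ _ _ (d - c - (4 * L + 8 * INR delta))); [lra|].
  apply (stable_segment cd hSA (INR delta) tau1 tau2 s1 e1 s2 e2 L c d); auto; [|lra].
  apply le_INR in Hdelta. exact Hdelta.
Qed.
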